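(* For $|q|<1$, \begin{align*} \sum_{i,j,k\geq 0}\frac{q^{2i^2+j^2+k^2+2ij+2ik+k}}{(q^2;q^2)_i(q^2;q^2)_j(q^2;q^2)_k}&=\frac{(q^3,q^4,q^7;q^7)_\infty}{(q;q)_\infty}, \\ \sum_{i,j,k\geq 0} \frac{q^{2i^2+j^2+k^2+2ij+2ik+2i+j}}{(q^2;q^2)_i(q^2;q^2)_j(q^2;q^2)_k}&=\frac{(q^2,q^5,q^7;q^7)_\infty}{(q;q)_\infty}, \\ \sum_{i,j,k\geq 0} \frac{q^{2i^2+j^2+k^2+2ij+2ik+2i+j+2k}}{(q^2;q^2)_i(q^2;q^2)_j(q^2;q^2)_k}&=\frac{(q,q^6,q^7;q^7)_\infty}{(q;q)_\infty}. \end{align*}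
   Context: For $|q|<1$: $(a;q)_n=\prod_{k=0}^{n-1}(1-aq^k)$ ($(a;q)_0=1$), $(a;q)_\infty=\prod_{k\ge0}(1-aq^k)$, $(a_1,\dots,a_m;q)_\infty=\prod_\ell(a_\ell;q)_\infty$. *)

From Stdlib Require Import Reals.
From Coquelicot Require Import Coquelicot.
Open Scope C_scope.

Fixpoint qpoch (a q : C) (n : nat) : C :=
  match n with
  | O => 1
  | S m => qpoch a q m * (1 - a * pow_n q m)
  end.

Definition is_qpoch_inf (a q p : C) : Prop :=
  filterlim (fun n => qpoch a q n) eventually (locally p).

(* the triple series sum_{i,j,k>=0} t i j k converges (as an iterated
   series, the innermost over k) with value s *)
Definition is_series3 (t : nat -> nat -> nat -> C) (s : C) : Prop :=
  exists f : nat -> C,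
    (forall i, exists g : nat -> C,
        (forall j, is_series (fun k => t i j k) (g j)) /\ is_series g (f i))
    /\ is_series f s.

(* Summing over [k] and then over [j] with Euler's identity
   [sum_k q^(k^2 - k) x^k / (q^2;q^2)_k = (-x;q^2)_oo] turns each triple sum into
   [(-q;q)_oo] times a Rogers-Selberg series [sum_i q^(2i^2) ... / ((q^2;q^2)_i (-q;q)_(2i))].
   The denominators [1 / ((q^2;q^2)_n (-q;q)_(2n))] (and [(-q^2;q)_(2n)] for the third
   identity) are the [beta]-sides of Bailey pairs in base [q^2], relative to [a = 1] or
   [a = q^2], each verified by a telescoping certificate. Bailey's lemma in the limit
   turns [sum a^n q^(2n^2) beta_n] into [sum a^r q^(2r^2) alpha_r / (a q^2;q^2)_oo],
   a theta series that the Jacobi triple product (itself the limit of a Bailey pair)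
   evaluates as [(q^k, q^(7-k), q^7; q^7)_oo]. Finally
   [(q^2;q^2)_oo = (q;q)_oo (-q;q)_oo]. Every exchange of a limit with a series is an
   instance of Tannery's theorem. *)

From Stdlib Require Import Reals Lia Lra.
From Coquelicot Require Import Coquelicot.
Open Scope C_scope.

Fixpoint csum (f : nat -> C) (n : nat) : C :=
  match n with O => 0 | S m => csum f m + f m end.
Fixpoint rsum (f : nat -> R) (n : nat) : R :=
  match n with O => 0%R | S m => (rsum f m + f m)%R end.
Fixpoint cprod (f : nat -> C) (n : nat) : C :=
  match n with O => 1 | S m => cprod f m * f m end.
Fixpoint rprod (f : nat -> R) (n : nat) : R :=
  match n with O => 1%R | S m => (rprod f m * f m)%R end.

(* [pow_n] unfolds to Coquelicot's abstract ring product [mult], which [ring]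
   and [field] treat as an opaque symbol; [cpow] is the same power written
   with [Cmult]. *)
Fixpoint cpow (x : C) (n : nat) : C :=
  match n with O => 1 | S m => x * cpow x m end.

Lemma pow_n_cpow x n : pow_n x n = cpow x n.
Proof. induction n as [|n IH]; [reflexivity|]. simpl. rewrite <- IH. reflexivity. Qed.

#[local] Arguments qpoch : simpl never.

Lemma qpoch_0 a q : qpoch a q 0 = 1.
Proof. reflexivity. Qed.

Lemma qpoch_S a q n : qpoch a q (S n) = qpoch a q n * (1 - a * cpow q n).
Proof. unfold qpoch; fold qpoch. rewrite pow_n_cpow. reflexivity. Qed.

Lemma csum_ext f g n : (forall k, (k < n)%nat -> f k = g k) -> csum f n = csum g n.
Proof.
  induction n; simpl; intros H; auto.
  rewrite IHn by (intros; apply H; lia). rewrite H by lia. reflexivity.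
Qed.

Lemma csum_plus f g n : csum (fun k => f k + g k) n = csum f n + csum g n.
Proof. induction n; simpl. ring. rewrite IHn. ring. Qed.

Lemma csum_scal c f n : csum (fun k => c * f k) n = c * csum f n.
Proof. induction n; simpl. ring. rewrite IHn. ring. Qed.

Lemma csum_split f a b : csum f (a + b) = csum f a + csum (fun k => f (a + k)%nat) b.
Proof.
  induction b; simpl. rewrite Nat.add_0_r. ring.
  rewrite Nat.add_succ_r. simpl. rewrite IHb. ring.
Qed.

Lemma csum_shift f n : csum f (S n) = f O + csum (fun k => f (S k)) n.
Proof.
  induction n. simpl. ring.
  change (csum f (S (S n))) with (csum f (S n) + f (S n)). rewrite IHn. simpl. ring.
Qed.

Lemma csum_shift_r f n : csum (fun k => f (S k)) n = csum f (S n) - f O.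
Proof. rewrite csum_shift. ring. Qed.

Lemma csum_telescope (G : nat -> C) n : csum (fun k => G (S k) - G k) n = G n - G O.
Proof. induction n; simpl. ring. rewrite IHn. ring. Qed.

Lemma Cmod_csum f n : (Cmod (csum f n) <= rsum (fun k => Cmod (f k)) n)%R.
Proof.
  induction n; simpl. rewrite Cmod_0; lra.
  eapply Rle_trans. apply Cmod_triangle. lra.
Qed.

Lemma rsum_le f g n :
  (forall k, (k < n)%nat -> f k <= g k)%R -> (rsum f n <= rsum g n)%R.
Proof.
  induction n; simpl; intros H. lra.
  assert (f n <= g n)%R by (apply H; lia).
  assert (rsum f n <= rsum g n)%R by (apply IHn; intros; apply H; lia). lra.
Qed.

Lemma rsum_nonneg f n : (forall k, 0 <= f k)%R -> (0 <= rsum f n)%R.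
Proof. intros H. induction n; simpl. lra. specialize (H n). lra. Qed.

Lemma rsum_scal c f n : rsum (fun k => c * f k)%R n = (c * rsum f n)%R.
Proof. induction n; simpl. ring. rewrite IHn. ring. Qed.

Lemma rprod_split f a b : rprod f (a + b) = (rprod f a * rprod (fun k => f (a + k)%nat) b)%R.
Proof.
  induction b; simpl. rewrite Nat.add_0_r. ring.
  rewrite Nat.add_succ_r. simpl. rewrite IHb. ring.
Qed.

Lemma rprod_nonneg f n : (forall k, 0 <= f k)%R -> (0 <= rprod f n)%R.
Proof. intros H. induction n; simpl. lra. apply Rmult_le_pos; auto. Qed.

Lemma rprod_pos f n : (forall k, 0 < f k)%R -> (0 < rprod f n)%R.
Proof. intros H. induction n; simpl. lra. apply Rmult_lt_0_compat; auto. Qed.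

Lemma rprod_decreasing f n m :
  (forall k, 0 <= f k <= 1)%R -> (n <= m)%nat -> (rprod f m <= rprod f n)%R.
Proof.
  intros H Hnm. induction Hnm. lra. simpl.
  assert (0 <= rprod f m)%R by (apply rprod_nonneg; intros; apply H).
  specialize (H m). nra.
Qed.

Lemma rprod_ge_1_minus_rsum (t : nat -> R) n :
  (forall k, 0 <= t k <= 1)%R -> (1 - rsum t n <= rprod (fun k => 1 - t k) n)%R.
Proof.
  intros H. induction n; simpl. lra.
  assert (0 <= rsum t n)%R by (apply rsum_nonneg; intros; apply H).
  specialize (H n).
  apply Rle_trans with ((1 - rsum t n) * (1 - t n))%R. nra.
  apply Rmult_le_compat_r; lra.
Qed.

Fixpoint tri (k : nat) : nat := match k with O => O | S j => (tri j + j)%nat end.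

Lemma tri_spec k : (2 * tri k + k = k * k)%nat.
Proof. induction k; simpl; lia. Qed.

Lemma cpow_S x n : cpow x (S n) = x * cpow x n.
Proof. reflexivity. Qed.

Lemma cpow_add (x : C) a b : cpow x (a + b) = cpow x a * cpow x b.
Proof. induction a; simpl. ring. rewrite IHa. ring. Qed.

Lemma cpow_mul (x : C) a b : cpow x (a * b) = cpow (cpow x a) b.
Proof.
  induction b. rewrite Nat.mul_0_r. reflexivity.
  rewrite Nat.mul_succ_r, cpow_add, IHb. simpl. ring.
Qed.

Lemma cpow_mult (x y : C) n : cpow (x * y) n = cpow x n * cpow y n.
Proof. induction n; simpl. ring. rewrite IHn. ring. Qed.

Lemma cpow_one n : cpow 1 n = 1.
Proof. induction n; simpl. reflexivity. rewrite IHn. ring. Qed.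

Lemma cpow_sq (x : C) r : cpow x (r * r) = cpow x (tri r) * cpow x (tri r) * cpow x r.
Proof.
  replace (r * r)%nat with (tri r + tri r + r)%nat by (pose proof (tri_spec r); lia).
  rewrite !cpow_add. ring.
Qed.

Lemma cpow_sq_S (x : C) j : cpow x (S j * S j) = cpow x (j * j) * cpow x j * cpow x j * x.
Proof. replace (S j * S j)%nat with (j * j + j + j + 1)%nat by lia. rewrite !cpow_add. simpl. ring. Qed.

Lemma Cmod_cpow (x : C) n : Cmod (cpow x n) = (Cmod x ^ n)%R.
Proof. induction n. apply Cmod_1. simpl cpow. rewrite Cmod_mult, IHn. simpl. ring. Qed.

Lemma Cmod_cpow_m1 r : Cmod (cpow (-1) r) = 1%R.
Proof.
  rewrite Cmod_cpow. replace (Cmod (-1)) with 1%R. apply pow1.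
  rewrite Cmod_R, Rabs_left by lra. lra.
Qed.

Lemma cpow_0 x : cpow x 0 = 1.
Proof. reflexivity. Qed.

Ltac normcpow := repeat (rewrite ?cpow_S, ?cpow_add, ?cpow_mult, ?cpow_0 in *).

Lemma qpoch_shift a p n : qpoch a p (S n) = (1 - a) * qpoch (a * p) p n.
Proof.
  induction n. rewrite !qpoch_S, !qpoch_0. simpl. ring.
  rewrite qpoch_S, IHn, (qpoch_S (a * p)). simpl. ring.
Qed.

Lemma qpoch_add a p m n : qpoch a p (m + n) = qpoch a p m * qpoch (a * cpow p m) p n.
Proof.
  induction n. rewrite Nat.add_0_r, qpoch_0. ring.
  rewrite Nat.add_succ_r, !qpoch_S, IHn, cpow_add. ring.
Qed.

Lemma qpoch_square_base a q n :
  qpoch a (q * q) n * qpoch (a * q) (q * q) n = qpoch a q (n + n).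
Proof.
  induction n. rewrite !qpoch_0. ring.
  replace (S n + S n)%nat with (S (S (n + n))) by lia.
  rewrite !qpoch_S, <- IHn.
  replace (cpow q (S (n + n))) with (q * cpow (q * q) n) by (normcpow; ring).
  replace (cpow q (n + n)) with (cpow (q * q) n) by (normcpow; ring). ring.
Qed.

Lemma qpoch_q_mq q n : qpoch q q n * qpoch (-q) q n = qpoch (q * q) (q * q) n.
Proof.
  induction n. rewrite !qpoch_0. ring.
  rewrite !qpoch_S, <- IHn.
  replace (cpow (q * q) n) with (cpow q n * cpow q n) by (normcpow; ring). ring.
Qed.

Lemma Cmod_lt_1_mult z w : (Cmod z < 1)%R -> (Cmod w < 1)%R -> (Cmod (z * w) < 1)%R.
Proof.
  intros. rewrite Cmod_mult.
  assert (0 <= Cmod z)%R by apply Cmod_ge_0. assert (0 <= Cmod w)%R by apply Cmod_ge_0. nra.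
Qed.

Lemma Cmod_cpow_le_1 (p : C) k : (Cmod p <= 1)%R -> (Cmod (cpow p k) <= 1)%R.
Proof.
  intros H. rewrite Cmod_cpow. assert (0 <= Cmod p)%R by apply Cmod_ge_0.
  induction k; simpl. lra. nra.
Qed.

Lemma Cmod_mult_cpow_lt_1 (a p : C) k :
  (Cmod a < 1)%R -> (Cmod p < 1)%R -> (Cmod (a * cpow p k) < 1)%R.
Proof.
  intros Ha Hp. rewrite Cmod_mult.
  assert (Cmod (cpow p k) <= 1)%R by (apply Cmod_cpow_le_1; lra).
  assert (0 <= Cmod (cpow p k))%R by apply Cmod_ge_0.
  assert (0 <= Cmod a)%R by apply Cmod_ge_0. nra.
Qed.

Lemma Cmod_cpow_S_lt_1 q m : (Cmod q < 1)%R -> (Cmod (cpow q (S m)) < 1)%R.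
Proof. intros H. apply Cmod_mult_cpow_lt_1; auto. Qed.

Lemma one_minus_neq_0 (a : C) : (Cmod a < 1)%R -> 1 - a <> 0.
Proof.
  intros H E. assert (a = 1) by (replace a with (1 - (1 - a)) by ring; rewrite E; ring).
  subst. rewrite Cmod_1 in H. lra.
Qed.

Lemma one_plus_neq_0 (x : C) : (Cmod x < 1)%R -> 1 + x <> 0.
Proof.
  intros H. replace (1 + x) with (1 - (- x)) by ring.
  apply one_minus_neq_0. rewrite Cmod_opp. auto.
Qed.

Lemma qpoch_neq_0 a p n : (Cmod a < 1)%R -> (Cmod p < 1)%R -> qpoch a p n <> 0.
Proof.
  intros Ha Hp. induction n.
  - rewrite qpoch_0. intro E. apply (f_equal Cmod) in E. rewrite Cmod_1, Cmod_0 in E. lra.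
  - rewrite qpoch_S. apply Cmult_neq_0; auto.
    apply one_minus_neq_0, Cmod_mult_cpow_lt_1; auto.
Qed.

Definition cvC (u : nat -> C) (l : C) : Prop :=
  forall eps : R, (0 < eps)%R -> exists N, forall n, (N <= n)%nat -> (Cmod (u n - l) < eps)%R.

Definition seriesC (f : nat -> C) (l : C) : Prop := cvC (csum f) l.

Lemma cvC_filterlim u l : cvC u l <-> filterlim u eventually (locally l).
Proof.
  rewrite (@filterlim_locally_ball_norm C_AbsRing nat C_NormedModule). split.
  - intros H eps. destruct (H eps (cond_pos eps)) as [N HN].
    exists N. intros n Hn. apply HN. lia.
  - intros H eps He. destruct (H (mkposreal eps He)) as [N HN].
    exists N. intros n Hn. apply (HN n Hn).
  - apply eventually_filter.
Qed.

Lemma sum_n_csum f n : sum_n f n = csum f (S n).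
Proof.
  induction n. rewrite sum_O. simpl. symmetry. apply Cplus_0_l.
  rewrite sum_Sn, IHn. reflexivity.
Qed.

Lemma seriesC_is_series f l : seriesC f l -> is_series f l.
Proof.
  intros H. unfold is_series. apply cvC_filterlim.
  intros eps He. destruct (H eps He) as [N HN]. exists N. intros n Hn.
  rewrite sum_n_csum. apply HN. lia.
Qed.

Lemma cvC_cauchy (u : nat -> C) :
  (forall eps, (0 < eps)%R -> exists N, forall n m, (N <= n)%nat -> (N <= m)%nat ->
     (Cmod (u n - u m) < eps)%R) ->
  exists l, cvC u l.
Proof.
  intros H. destruct (proj1 (@filterlim_locally_cauchy nat C_CompleteNormedModule
                               eventually eventually_filter u)) as [l Hl].
  - intros eps. destruct (H eps (cond_pos eps)) as [N HN].
    exists (fun n => (N <= n)%nat). split. exists N; auto.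
    intros n m Hn Hm. apply (@norm_compat1 C_AbsRing C_NormedModule). apply (HN m n Hm Hn).
  - exists l. apply cvC_filterlim. exact Hl.
Qed.

Lemma Cmod_sub_sym a b : Cmod (a - b) = Cmod (b - a).
Proof. replace (a - b) with (- (b - a)) by ring. apply Cmod_opp. Qed.

Lemma Cmod_sub_triangle a b c : (Cmod (a - c) <= Cmod (a - b) + Cmod (b - c))%R.
Proof. replace (a - c) with ((a - b) + (b - c)) by ring. apply Cmod_triangle. Qed.

Lemma cvC_const c : cvC (fun _ => c) c.
Proof.
  intros eps He. exists O. intros.
  replace (c - c) with (RtoC 0) by ring. rewrite Cmod_0. auto.
Qed.

Lemma cvC_ext_eventually u v l :
  (exists N, forall n, (N <= n)%nat -> u n = v n) -> cvC u l -> cvC v l.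
Proof.
  intros [N0 H0] H eps He. destruct (H eps He) as [N HN].
  exists (max N N0). intros n Hn. rewrite <- H0 by lia. apply HN. lia.
Qed.

Lemma cvC_ext u v l : (forall n, u n = v n) -> cvC u l -> cvC v l.
Proof. intros E. apply cvC_ext_eventually. exists O. auto. Qed.

Lemma cvC_plus u v a b : cvC u a -> cvC v b -> cvC (fun n => u n + v n) (a + b).
Proof.
  intros Hu Hv eps He.
  destruct (Hu (eps/2)%R) as [N1 H1]. lra. destruct (Hv (eps/2)%R) as [N2 H2]. lra.
  exists (max N1 N2). intros n Hn.
  specialize (H1 n ltac:(lia)). specialize (H2 n ltac:(lia)).
  replace (u n + v n - (a + b)) with ((u n - a) + (v n - b)) by ring.
  eapply Rle_lt_trans. apply Cmod_triangle. lra.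
Qed.

Lemma cvC_opp u a : cvC u a -> cvC (fun n => - u n) (- a).
Proof.
  intros Hu eps He. destruct (Hu eps He) as [N H]. exists N. intros n Hn.
  replace (- u n - - a) with (- (u n - a)) by ring. rewrite Cmod_opp. auto.
Qed.

Lemma cvC_minus u v a b : cvC u a -> cvC v b -> cvC (fun n => u n - v n) (a - b).
Proof. intros. apply cvC_plus; auto. apply cvC_opp; auto. Qed.

Lemma cvC_bounded u a : cvC u a -> exists B, (0 < B)%R /\ forall n, (Cmod (u n) <= B)%R.
Proof.
  intros H. destruct (@filterlim_bounded C_AbsRing C_NormedModule u) as [B HB].
  { exists a. apply cvC_filterlim. exact H. }
  exists (Rmax B 1). split. apply Rlt_le_trans with 1%R. lra. apply Rmax_r.
  intros n. eapply Rle_trans. apply (HB n). apply Rmax_l.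
Qed.

Lemma cvC_mult u v a b : cvC u a -> cvC v b -> cvC (fun n => u n * v n) (a * b).
Proof.
  intros Hu Hv. destruct (cvC_bounded u a Hu) as [B [HB HBn]].
  intros eps He. set (e1 := (eps / (2 * (Cmod b + 1)))%R). set (e2 := (eps / (2 * B))%R).
  assert (0 <= Cmod b)%R by apply Cmod_ge_0.
  assert (0 < e1)%R by (unfold e1; apply Rdiv_lt_0_compat; lra).
  assert (0 < e2)%R by (unfold e2; apply Rdiv_lt_0_compat; lra).
  destruct (Hu e1 H0) as [N1 HN1]. destruct (Hv e2 H1) as [N2 HN2].
  exists (max N1 N2). intros n Hn. specialize (HN1 n ltac:(lia)). specialize (HN2 n ltac:(lia)).
  replace (u n * v n - a * b) with (u n * (v n - b) + (u n - a) * b) by ring.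
  eapply Rle_lt_trans. apply Cmod_triangle. rewrite !Cmod_mult.
  assert (Cmod (u n) * Cmod (v n - b) <= B * e2)%R.
  { apply Rmult_le_compat; try apply Cmod_ge_0; auto. lra. }
  assert (B * e2 = eps / 2)%R by (unfold e2; field; lra).
  assert (e1 * (Cmod b + 1) = eps / 2)%R by (unfold e1; field; lra).
  assert (Cmod (u n - a) * Cmod b < e1 * (Cmod b + 1))%R.
  { apply Rle_lt_trans with (e1 * Cmod b)%R.
    apply Rmult_le_compat_r; try apply Cmod_ge_0; lra.
    apply Rmult_lt_compat_l; lra. }
  lra.
Qed.

Lemma cvC_scal c u a : cvC u a -> cvC (fun n => c * u n) (c * a).
Proof. intros. apply cvC_mult; auto. apply cvC_const. Qed.

Lemma cvC_unique u a b : cvC u a -> cvC u b -> a = b.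
Proof.
  intros Ha Hb. destruct (Ceq_dec a b) as [E|E]; auto. exfalso.
  assert (0 < Cmod (a - b))%R.
  { apply Cmod_gt_0. intro Z. apply E. replace a with ((a - b) + b) by ring. rewrite Z. ring. }
  destruct (Ha (Cmod (a - b) / 2)%R) as [N1 H1]. lra.
  destruct (Hb (Cmod (a - b) / 2)%R) as [N2 H2]. lra.
  specialize (H1 (max N1 N2) ltac:(lia)). specialize (H2 (max N1 N2) ltac:(lia)).
  pose proof (Cmod_sub_triangle a (u (max N1 N2)) b).
  rewrite Cmod_sub_sym in H1. lra.
Qed.

Lemma cvC_inv u a : cvC u a -> a <> 0 -> cvC (fun n => / u n) (/ a).
Proof.
  intros Hu Ha. assert (HA : (0 < Cmod a)%R) by (apply Cmod_gt_0; auto).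
  intros eps He. set (e := Rmin (Cmod a / 2) (eps * Cmod a * Cmod a / 2)).
  assert (0 < e)%R.
  { unfold e. apply Rmin_case; try lra.
    apply Rdiv_lt_0_compat; try lra. repeat apply Rmult_lt_0_compat; auto. }
  destruct (Hu e H) as [N HN]. exists N. intros n Hn. specialize (HN n Hn).
  assert (Cmod a <= Cmod (a - u n) + Cmod (u n))%R.
  { replace a with ((a - u n) + u n) at 1 by ring. apply Cmod_triangle. }
  rewrite Cmod_sub_sym in H0.
  assert (e <= Cmod a / 2)%R by apply Rmin_l.
  assert (Cmod (u n) >= Cmod a / 2)%R by lra.
  assert (Hun : u n <> 0). { intro Z. rewrite Z, Cmod_0 in H2. lra. }
  replace (/ u n - / a) with ((a - u n) / (u n * a)) by (field; auto).
  rewrite Cmod_div by (apply Cmult_neq_0; auto). rewrite Cmod_mult, Cmod_sub_sym.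
  apply Rmult_lt_reg_r with (Cmod (u n) * Cmod a)%R. apply Rmult_lt_0_compat; lra.
  unfold Rdiv. rewrite Rmult_assoc, Rinv_l, Rmult_1_r.
  2: { apply Rgt_not_eq. apply Rmult_lt_0_compat; lra. }
  assert (e <= eps * Cmod a * Cmod a / 2)%R by apply Rmin_r.
  assert (eps * (Cmod a / 2) * Cmod a <= eps * Cmod (u n) * Cmod a)%R.
  { apply Rmult_le_compat_r. lra. apply Rmult_le_compat_l; lra. }
  lra.
Qed.

Lemma cvC_subseq u a (h : nat -> nat) :
  cvC u a -> (forall n, (n <= h n)%nat) -> cvC (fun n => u (h n)) a.
Proof.
  intros H Hh eps He. destruct (H eps He) as [N HN].
  exists N. intros n Hn. apply HN. specialize (Hh n). lia.
Qed.

Lemma cvC_sub_shift u l k : cvC u l -> cvC (fun n => u (n - k)%nat) l.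
Proof.
  intros H eps He. destruct (H eps He) as [N HN].
  exists (N + k)%nat. intros n Hn. apply HN. lia.
Qed.

Lemma cvC_csum (f : nat -> nat -> C) (g : nat -> C) K :
  (forall k, (k < K)%nat -> cvC (fun N => f N k) (g k)) ->
  cvC (fun N => csum (f N) K) (csum g K).
Proof.
  induction K; intros H; simpl. apply cvC_const.
  apply cvC_plus. apply IHK. intros; apply H; lia. apply H. lia.
Qed.

Lemma cvC_Cmod_le (u : nat -> C) l c (B : R) :
  cvC u l -> (forall n, Cmod (u n - c) <= B)%R -> (Cmod (l - c) <= B)%R.
Proof.
  intros H Hb. apply Rnot_lt_le. intro Hlt. destruct (H (Cmod (l - c) - B)%R) as [N HN]. lra.
  specialize (HN N (le_n N)). specialize (Hb N).
  pose proof (Cmod_sub_triangle l (u N) c). rewrite Cmod_sub_sym in HN. lra.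
Qed.

Lemma cvC_Cmod_ge (u : nat -> C) l (B : R) :
  cvC u l -> (forall n, B <= Cmod (u n))%R -> (B <= Cmod l)%R.
Proof.
  intros H Hb. apply Rnot_lt_le. intro Hlt. destruct (H (B - Cmod l)%R) as [N HN]. lra.
  specialize (HN N (le_n N)). specialize (Hb N).
  assert (Cmod (u N) <= Cmod (u N - l) + Cmod l)%R.
  { replace (u N) with ((u N - l) + l) at 1 by ring. apply Cmod_triangle. }
  lra.
Qed.

Lemma seriesC_ext f g l : (forall k, f k = g k) -> seriesC f l -> seriesC g l.
Proof. intros E. apply cvC_ext. intros n. apply csum_ext. auto. Qed.

Lemma seriesC_scal c f l : seriesC f l -> seriesC (fun k => c * f k) (c * l).
Proof.
  intros H. apply cvC_ext with (fun n => c * csum f n).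
  intros n. symmetry. apply csum_scal. apply cvC_scal. auto.
Qed.

Lemma seriesC_plus f g a b : seriesC f a -> seriesC g b -> seriesC (fun k => f k + g k) (a + b).
Proof.
  intros Ha Hb. apply cvC_ext with (fun n => csum f n + csum g n).
  intros n. symmetry. apply csum_plus. apply cvC_plus; auto.
Qed.

Lemma seriesC_unique f a b : seriesC f a -> seriesC f b -> a = b.
Proof. apply cvC_unique. Qed.

Lemma seriesC_shift f l : seriesC f l -> seriesC (fun k => f (S k)) (l - f O).
Proof.
  intros H. apply cvC_ext with (fun n => csum f (S n) - f O).
  intros n. symmetry. apply csum_shift_r.
  apply cvC_minus. apply cvC_subseq; auto. apply cvC_const.
Qed.

(** * Summable majorants and Tannery's theorem *)

Definition summable (M : nat -> R) : Prop :=
  (forall k, 0 <= M k)%R /\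
  forall eps, (0 < eps)%R ->
    exists K, forall a b, (K <= a)%nat -> (rsum (fun k => M (a + k)%nat) b < eps)%R.

Lemma summable_le_eventually (M M' : nat -> R) K0 :
  (forall k, 0 <= M' k)%R -> (forall k, (K0 <= k)%nat -> M' k <= M k)%R ->
  summable M -> summable M'.
Proof.
  intros H0 Hle [HM HT]. split; auto. intros eps He. destruct (HT eps He) as [K HK].
  exists (max K K0). intros a b Ha. eapply Rle_lt_trans. 2: apply (HK a b); lia.
  apply rsum_le. intros. apply Hle. lia.
Qed.

Lemma summable_le (M M' : nat -> R) :
  (forall k, 0 <= M' k)%R -> (forall k, M' k <= M k)%R -> summable M -> summable M'.
Proof. intros. apply summable_le_eventually with M O; auto. Qed.

Lemma summable_scal (M : nat -> R) c : (0 <= c)%R -> summable M -> summable (fun k => c * M k)%R.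
Proof.
  intros Hc [HM HT]. split. intros; apply Rmult_le_pos; auto.
  intros eps He. destruct (HT (eps / (c + 1))%R) as [K HK]. apply Rdiv_lt_0_compat; lra.
  exists K. intros a b Ha. rewrite rsum_scal. specialize (HK a b Ha).
  assert (0 <= rsum (fun k => M (a + k)%nat) b)%R by (apply rsum_nonneg; auto).
  apply Rle_lt_trans with ((c + 1) * rsum (fun k => M (a + k)%nat) b)%R.
  apply Rmult_le_compat_r; lra.
  apply Rmult_lt_reg_l with (/ (c + 1))%R. apply Rinv_0_lt_compat; lra.
  rewrite <- Rmult_assoc, Rinv_l by lra. rewrite Rmult_1_l. unfold Rdiv in HK. lra.
Qed.

Lemma rsum_geom r a b :
  r <> 1%R -> rsum (fun k => r ^ (a + k))%R b = (r ^ a * (1 - r ^ b) / (1 - r))%R.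
Proof.
  intros Hr. induction b; simpl. field. intro. apply Hr. lra.
  rewrite IHb, pow_add. field. intro; apply Hr; lra.
Qed.

Lemma summable_geom r : (0 <= r < 1)%R -> summable (fun k => r ^ k)%R.
Proof.
  intros Hr. split. intros; apply pow_le; lra.
  intros eps He.
  destruct (pow_lt_1_zero r ltac:(rewrite Rabs_pos_eq; lra) (eps * (1 - r) / 2)%R) as [K HK].
  { apply Rdiv_lt_0_compat; try lra. apply Rmult_lt_0_compat; lra. }
  exists K. intros a b Ha. rewrite rsum_geom by lra. specialize (HK a Ha).
  rewrite Rabs_pos_eq in HK by (apply pow_le; lra).
  assert (0 <= r ^ b <= 1)%R.
  { split. apply pow_le; lra. destruct b. simpl; lra. left. apply pow_lt_1_compat; [lra|lia]. }
  assert (0 <= r ^ a)%R by (apply pow_le; lra).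
  apply Rle_lt_trans with (r ^ a / (1 - r))%R.
  - unfold Rdiv. apply Rmult_le_compat_r. left; apply Rinv_0_lt_compat; lra.
    assert (r ^ a * (1 - r ^ b) <= r ^ a * 1)%R by (apply Rmult_le_compat_l; lra). lra.
  - apply Rmult_lt_reg_r with (1 - r)%R. lra.
    unfold Rdiv. rewrite Rmult_assoc, Rinv_l by lra. lra.
Qed.

Lemma summable_ratio_half (M : nat -> R) K0 :
  (forall k, 0 <= M k)%R -> (forall k, (K0 <= k)%nat -> M (S k) <= M k / 2)%R -> summable M.
Proof.
  intros H0 H.
  assert (Hdecay : forall j, (M (K0 + j)%nat <= M K0 * (/2) ^ j)%R).
  { induction j. rewrite Nat.add_0_r. simpl. lra.
    rewrite Nat.add_succ_r. eapply Rle_trans. apply H. lia. simpl. lra. }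
  apply summable_le_eventually with (fun k => M K0 * 2 ^ K0 * (/2) ^ k)%R K0; auto.
  - intros k Hk. replace k with (K0 + (k - K0))%nat by lia.
    eapply Rle_trans. apply Hdecay.
    rewrite pow_add, <- Rmult_assoc, (Rmult_assoc (M K0)), <- Rpow_mult_distr.
    replace (2 * / 2)%R with 1%R by field. rewrite pow1. lra.
  - apply summable_scal. apply Rmult_le_pos; auto. apply pow_le; lra.
    apply summable_geom. lra.
Qed.

(* [r ^ tri k] decays faster than any geometric sequence, so it absorbs [s ^ k]. *)
Lemma summable_tri_geom (A r s : R) :
  (0 <= A)%R -> (0 <= r < 1)%R -> (0 <= s)%R -> summable (fun k => A * r ^ (tri k) * s ^ k)%R.
Proof.
  intros HA Hr Hs.
  destruct (pow_lt_1_zero r ltac:(rewrite Rabs_pos_eq; lra) (/ (2 * (s + 1)))%R) as [K HK].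
  { apply Rinv_0_lt_compat; lra. }
  apply summable_ratio_half with K.
  { intros. repeat apply Rmult_le_pos; auto; apply pow_le; lra. }
  intros k Hk. specialize (HK k Hk). rewrite Rabs_pos_eq in HK by (apply pow_le; lra).
  simpl tri. rewrite pow_add. simpl pow.
  assert (0 <= r ^ tri k)%R by (apply pow_le; lra).
  assert (0 <= s ^ k)%R by (apply pow_le; lra).
  assert (0 <= r ^ k)%R by (apply pow_le; lra).
  assert (r ^ k * s <= / 2)%R.
  { apply Rle_trans with (/ (2 * (s + 1)) * (s + 1))%R. apply Rmult_le_compat; lra.
    right. field. lra. }
  set (Z := (A * r ^ tri k * s ^ k)%R).
  assert (0 <= Z)%R by (unfold Z; repeat apply Rmult_le_pos; auto).
  replace (A * (r ^ tri k * r ^ k) * (s * s ^ k))%R with (Z * (r ^ k * s))%R by (unfold Z; ring).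
  apply Rle_trans with (Z * / 2)%R. apply Rmult_le_compat_l; auto. lra.
Qed.

Lemma seriesC_abs_conv (f : nat -> C) (M : nat -> R) :
  (forall k, Cmod (f k) <= M k)%R -> summable M -> exists l, seriesC f l.
Proof.
  intros Hf [HM HT]. apply cvC_cauchy. intros eps He. destruct (HT eps He) as [K HK].
  exists K.
  assert (Htail : forall n m, (K <= n)%nat -> (n <= m)%nat -> (Cmod (csum f m - csum f n) < eps)%R).
  { intros n m Hn Hm. replace m with (n + (m - n))%nat by lia.
    rewrite csum_split. replace (csum f n + _ - csum f n) with (csum (fun k => f (n + k)%nat) (m - n))
      by ring.
    eapply Rle_lt_trans. apply Cmod_csum.
    eapply Rle_lt_trans. 2: apply (HK n (m - n)%nat Hn). apply rsum_le. intros; apply Hf. }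
  intros n m Hn Hm. destruct (Nat.le_ge_cases n m).
  - rewrite Cmod_sub_sym. auto.
  - auto.
Qed.

Lemma seriesC_tail_bound (f : nat -> C) (M : nat -> R) l a eps :
  (forall k, Cmod (f k) <= M k)%R -> seriesC f l ->
  (forall b, rsum (fun k => M (a + k)%nat) b <= eps)%R -> (Cmod (l - csum f a) <= eps)%R.
Proof.
  intros Hf Hl Ht.
  apply cvC_Cmod_le with (fun n => csum f (a + n)).
  - apply cvC_subseq with (h := fun n => (a + n)%nat); auto. intros; lia.
  - intros n. rewrite csum_split.
    replace (csum f a + _ - csum f a) with (csum (fun k => f (a + k)%nat) n)
      by ring.
    eapply Rle_trans. apply Cmod_csum. eapply Rle_trans. 2: apply (Ht n).
    apply rsum_le. intros; apply Hf.
Qed.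

Lemma tannery (f : nat -> nat -> C) (g : nat -> C) (M : nat -> R) (h : nat -> nat) :
  (forall k, cvC (fun N => f N k) (g k)) -> (forall N k, Cmod (f N k) <= M k)%R -> summable M ->
  (forall N, (N <= h N)%nat) ->
  exists l, seriesC g l /\ cvC (fun N => csum (f N) (h N)) l.
Proof.
  intros Hlim Hb HM Hh.
  assert (Hg : forall k, (Cmod (g k) <= M k)%R).
  { intros k. replace (g k) with (g k - 0) by ring.
    apply cvC_Cmod_le with (fun N => f N k); auto.
    intros N. replace (f N k - 0) with (f N k) by ring. auto. }
  destruct (seriesC_abs_conv g M Hg HM) as [l Hl]. exists l. split; auto.
  intros eps He. destruct HM as [HM0 HT]. destruct (HT (eps/4)%R) as [K HK]. lra.
  assert (HlK : (Cmod (l - csum g K) <= eps/4)%R).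
  { apply seriesC_tail_bound with M; auto. intros b. left. apply HK. lia. }
  destruct (cvC_csum f g K (fun k _ => Hlim k) (eps/4)%R) as [N1 HN1]. lra.
  exists (max N1 K). intros N HN. specialize (HN1 N ltac:(lia)).
  replace (h N) with (K + (h N - K))%nat by (specialize (Hh N); lia).
  rewrite csum_split.
  set (tail := csum (fun k => f N (K + k)%nat) (h N - K)).
  assert (Cmod tail < eps/4)%R.
  { eapply Rle_lt_trans. apply Cmod_csum.
    eapply Rle_lt_trans. 2: apply (HK K (h N - K)%nat); lia. apply rsum_le. intros; apply Hb. }
  replace (csum (f N) K + tail - l) with ((csum (f N) K - csum g K) + tail + (csum g K - l)) by ring.
  rewrite Cmod_sub_sym in HlK.
  pose proof (Cmod_triangle (csum (f N) K - csum g K + tail) (csum g K - l)).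
  pose proof (Cmod_triangle (csum (f N) K - csum g K) tail).
  lra.
Qed.

(** * Infinite products *)

Lemma rprod_one_minus_lower_bound (t : nat -> R) :
  (forall k, 0 <= t k < 1)%R -> summable t ->
  exists L, (0 < L)%R /\ forall n, (L <= rprod (fun k => 1 - t k) n)%R.
Proof.
  intros Ht [H0 HT]. destruct (HT (1/2)%R) as [K HK]. lra.
  set (P := rprod (fun k => 1 - t k)%R).
  assert (HPK : (0 < P K)%R) by (apply rprod_pos; intros k; specialize (Ht k); lra).
  exists (P K / 2)%R. split. lra. intros n. destruct (Nat.le_ge_cases n K).
  - assert (P K <= P n)%R by (apply rprod_decreasing; auto; intros k; specialize (Ht k); lra).
    lra.
  - unfold P. replace n with (K + (n - K))%nat by lia. rewrite rprod_split. fold P.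
    assert (1 - rsum (fun k => t (K + k)%nat) (n - K) <= rprod (fun k => 1 - t (K + k)%nat) (n - K))%R.
    { apply rprod_ge_1_minus_rsum. intros k; specialize (Ht (K + k)%nat); lra. }
    specialize (HK K (n - K)%nat (le_n K)).
    apply Rle_trans with (P K * (1/2))%R. lra. apply Rmult_le_compat_l; lra.
Qed.

Lemma Cmod_cprod_lower (x : nat -> C) n : (forall k, Cmod (x k) <= 1)%R ->
  (rprod (fun k => 1 - Cmod (x k)) n <= Cmod (cprod (fun k => (1 + x k)%C) n))%R.
Proof.
  intros H. induction n; simpl. rewrite Cmod_1. lra. rewrite Cmod_mult.
  apply Rmult_le_compat; auto.
  - apply rprod_nonneg. intros k; specialize (H k); lra.
  - specialize (H n); lra.
  - pose proof (Cmod_triangle (1 + x n) (- x n)) as Htri.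
    replace (1 + x n + - x n) with (RtoC 1) in Htri by ring.
    rewrite Cmod_opp, Cmod_1 in Htri. lra.
Qed.

Lemma Cmod_cprod_upper (x : nat -> C) n : (forall k, Cmod (x k) <= 1)%R ->
  (Cmod (cprod (fun k => (1 + x k)%C) n) * rprod (fun k => 1 - Cmod (x k)) n <= 1)%R.
Proof.
  intros H. induction n; simpl. rewrite Cmod_1. lra. rewrite Cmod_mult.
  set (P := cprod (fun k => (1 + x k)%C) n) in *.
  set (Q := rprod (fun k => 1 - Cmod (x k))%R n) in *.
  assert (0 <= Q)%R by (apply rprod_nonneg; intros k; specialize (H k); lra).
  assert (0 <= Cmod (x n))%R by apply Cmod_ge_0. specialize (H n).
  assert (Cmod (1 + x n) <= 1 + Cmod (x n))%R.
  { eapply Rle_trans. apply Cmod_triangle. rewrite Cmod_1. lra. }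
  assert (0 <= Cmod P)%R by apply Cmod_ge_0. assert (0 <= Cmod (1 + x n))%R by apply Cmod_ge_0.
  assert (Cmod (1 + x n) * (1 - Cmod (x n)) <= 1)%R.
  { apply Rle_trans with ((1 + Cmod (x n)) * (1 - Cmod (x n)))%R.
    apply Rmult_le_compat_r; lra. nra. }
  replace (Cmod P * Cmod (1 + x n) * (Q * (1 - Cmod (x n))))%R
    with ((Cmod P * Q) * (Cmod (1 + x n) * (1 - Cmod (x n))))%R by ring.
  assert (0 <= Cmod (1 + x n) * (1 - Cmod (x n)))%R by (apply Rmult_le_pos; lra).
  assert (0 <= Cmod P * Q)%R by (apply Rmult_le_pos; lra).
  nra.
Qed.

(* The partial products stay in an annulus [L <= |P n| <= 1/L], and the
   increments [P (n+1) - P n = P n * x n] are then dominated by [|x n| / L]. *)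
Lemma cprod_cv (x : nat -> C) :
  (forall k, Cmod (x k) < 1)%R -> summable (fun k => Cmod (x k)) ->
  exists L l, (0 < L)%R /\ cvC (cprod (fun k => (1 + x k)%C)) l /\
    (forall n, L <= Cmod (cprod (fun k => (1 + x k)%C) n))%R /\
    (forall n, Cmod (cprod (fun k => (1 + x k)%C) n) <= / L)%R /\ (L <= Cmod l)%R.
Proof.
  intros Hx Hs. set (P := cprod (fun k => (1 + x k)%C)).
  destruct (rprod_one_minus_lower_bound (fun k => Cmod (x k))) as [L [HL HLn]]; auto.
  { intros k. split. apply Cmod_ge_0. auto. }
  assert (Hx1 : forall k, (Cmod (x k) <= 1)%R) by (intros k; left; auto).
  assert (Hlow : forall n, (L <= Cmod (P n))%R).
  { intros n. eapply Rle_trans. apply HLn. apply Cmod_cprod_lower; auto. }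
  assert (Hup : forall n, (Cmod (P n) <= / L)%R).
  { intros n. pose proof (Cmod_cprod_upper x n Hx1). specialize (HLn n).
    assert (0 <= Cmod (P n))%R by apply Cmod_ge_0.
    apply Rmult_le_reg_r with L; auto. rewrite Rinv_l by lra.
    apply Rle_trans with (Cmod (P n) * rprod (fun k => 1 - Cmod (x k)) n)%R; auto.
    apply Rmult_le_compat_l; auto. }
  destruct (seriesC_abs_conv (fun n => P (S n) - P n) (fun k => / L * Cmod (x k))%R) as [s Hs'].
  { intros k. unfold P. simpl cprod. fold P.
    replace (P k * (1 + x k) - P k) with (P k * x k) by ring.
    rewrite Cmod_mult. apply Rmult_le_compat_r. apply Cmod_ge_0. apply Hup. }
  { apply summable_scal; auto. left; apply Rinv_0_lt_compat; auto. }
  assert (Hl : cvC P (1 + s)).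
  { apply cvC_ext with (fun n => 1 + csum (fun n0 => P (S n0) - P n0) n).
    intros n. rewrite csum_telescope. unfold P. simpl. ring.
    apply cvC_plus. apply cvC_const. auto. }
  exists L, (1 + s). repeat split; auto. apply cvC_Cmod_ge with P; auto.
Qed.

Lemma qpoch_as_cprod a p n : qpoch a p n = cprod (fun k => 1 + (- (a * cpow p k))) n.
Proof. induction n; simpl. apply qpoch_0. rewrite qpoch_S, IHn. ring. Qed.

Lemma qpoch_cv a p : (Cmod a < 1)%R -> (Cmod p < 1)%R ->
  exists L l, (0 < L)%R /\ cvC (qpoch a p) l /\ (forall n, L <= Cmod (qpoch a p n))%R /\
    (forall n, Cmod (qpoch a p n) <= / L)%R /\ (L <= Cmod l)%R.
Proof.
  intros Ha Hp. destruct (cprod_cv (fun k => - (a * cpow p k))) as [L [l [H1 [H2 [H3 [H4 H5]]]]]].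
  { intros k. rewrite Cmod_opp. apply Cmod_mult_cpow_lt_1; auto. }
  { apply summable_le with (fun k => Cmod a * Cmod p ^ k)%R.
    - intros; apply Cmod_ge_0.
    - intros k. rewrite Cmod_opp, Cmod_mult, Cmod_cpow. lra.
    - apply summable_scal. apply Cmod_ge_0. apply summable_geom.
      split; auto. apply Cmod_ge_0. }
  exists L, l. repeat split; auto.
  - apply cvC_ext with (cprod (fun k => 1 + (- (a * cpow p k)))); auto.
    intros n. symmetry. apply qpoch_as_cprod.
  - intros n. rewrite qpoch_as_cprod. auto.
  - intros n. rewrite qpoch_as_cprod. auto.
Qed.

Lemma qpoch_cv_neq_0 a p : (Cmod a < 1)%R -> (Cmod p < 1)%R ->
  exists l, cvC (qpoch a p) l /\ l <> 0.
Proof.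
  intros Ha Hp. destruct (qpoch_cv a p Ha Hp) as [L [l [HL [Hl [_ [_ HLl]]]]]].
  exists l. split; auto. intro E. rewrite E, Cmod_0 in HLl. lra.
Qed.

Lemma is_qpoch_inf_cvC a b P : cvC (qpoch a b) P -> is_qpoch_inf a b P.
Proof. apply cvC_filterlim. Qed.

(** * Gaussian binomial coefficients and Euler's identity *)

Fixpoint qfall (p : C) (N k : nat) : C :=
  match k with O => 1 | S j => qfall p N j * (1 - cpow p (N - j)) end.

Definition qbinom (p : C) (N k : nat) : C := qfall p N k / qpoch p p k.

Lemma qfall_gt p N k : (N < k)%nat -> qfall p N k = 0.
Proof.
  induction k; intros H. lia. simpl. destruct (Nat.eq_dec k N).
  - subst. rewrite Nat.sub_diag. simpl. ring.
  - rewrite IHk by lia. ring.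
Qed.

Lemma qfall_S p N k : qfall p (S N) (S k) = (1 - cpow p (S N)) * qfall p N k.
Proof.
  induction k. simpl. rewrite ?Nat.sub_0_r. ring.
  change (qfall p (S N) (S (S k))) with (qfall p (S N) (S k) * (1 - cpow p (S N - S k))).
  rewrite IHk. simpl. ring.
Qed.

Lemma qfall_qpoch p N k : (k <= N)%nat -> qfall p N k * qpoch p p (N - k) = qpoch p p N.
Proof.
  induction k; intros H. simpl. rewrite Nat.sub_0_r. ring.
  simpl qfall. rewrite <- IHk by lia. replace (N - k)%nat with (S (N - S k)) by lia.
  rewrite qpoch_S. replace (p * cpow p (N - S k)) with (cpow p (S (N - S k))) by reflexivity.
  replace (S (N - S k)) with (N - k)%nat by lia. ring.
Qed.

Lemma qfall_Cmod_le p N k : (Cmod p < 1)%R -> (Cmod (qfall p N k) <= 2 ^ k)%R.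
Proof.
  intros Hp. induction k; simpl. rewrite Cmod_1. lra. rewrite Cmod_mult.
  assert (Cmod (1 - cpow p (N - k)) <= 2)%R.
  { unfold Cminus. eapply Rle_trans. apply Cmod_triangle. rewrite Cmod_opp, Cmod_1.
    pose proof (Cmod_cpow_le_1 p (N - k) (Rlt_le _ _ Hp)). lra. }
  assert (0 <= Cmod (qfall p N k))%R by apply Cmod_ge_0.
  assert (0 <= Cmod (1 - cpow p (N - k)))%R by apply Cmod_ge_0. nra.
Qed.

Lemma qfall_cv p k : (Cmod p < 1)%R -> cvC (fun N => qfall p N k) 1.
Proof.
  intros Hp. assert (Hr : (0 <= Cmod p)%R) by apply Cmod_ge_0.
  assert (Hpow : forall j, cvC (fun N => cpow p (N - j)) 0).
  { intros j eps He.
    destruct (pow_lt_1_zero (Cmod p) ltac:(rewrite Rabs_pos_eq; lra) eps He) as [N0 HN0].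
    exists (N0 + j)%nat. intros n Hn.
    replace (cpow p (n - j) - 0) with (cpow p (n - j)) by ring. rewrite Cmod_cpow.
    specialize (HN0 (n - j)%nat ltac:(lia)). rewrite Rabs_pos_eq in HN0 by (apply pow_le; lra).
    auto. }
  induction k. exact (cvC_const 1).
  pose proof (cvC_mult _ _ _ _ IHk (cvC_minus _ _ _ _ (cvC_const 1) (Hpow k))) as H.
  replace (1 * (1 - 0)) with (RtoC 1) in H by ring. exact H.
Qed.

Lemma qbinom_0 p N : qbinom p N 0 = 1.
Proof. unfold qbinom. simpl. rewrite qpoch_0. field. Qed.

Lemma qbinom_gt p N k : (N < k)%nat -> qbinom p N k = 0.
Proof. intros. unfold qbinom. rewrite qfall_gt by auto. unfold Cdiv. ring. Qed.

Lemma qbinom_pascal p N k : (Cmod p < 1)%R ->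
  qbinom p (S N) (S k) = qbinom p N k + cpow p (S k) * qbinom p N (S k).
Proof.
  intros Hp. unfold qbinom. rewrite qfall_S. simpl qfall. rewrite qpoch_S.
  assert (H1 : qpoch p p k <> 0) by (apply qpoch_neq_0; auto).
  assert (H2 : 1 - p * cpow p k <> 0) by (apply one_minus_neq_0, Cmod_mult_cpow_lt_1; auto).
  destruct (Nat.le_gt_cases k N).
  - replace (cpow p (S N)) with (cpow p (S k) * cpow p (N - k)).
    + simpl cpow. field. split; auto.
    + rewrite <- cpow_add. f_equal. lia.
  - rewrite qfall_gt by lia. field. split; auto.
Qed.

Lemma qbinom_qpoch p N k : (Cmod p < 1)%R -> (k <= N)%nat ->
  qbinom p N k = qpoch p p N / (qpoch p p k * qpoch p p (N - k)).
Proof.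
  intros Hp H. unfold qbinom. rewrite <- (qfall_qpoch p N k H).
  field. split; apply qpoch_neq_0; auto.
Qed.

Lemma qbinom_cv p k : (Cmod p < 1)%R -> cvC (fun N => qbinom p N k) (/ qpoch p p k).
Proof.
  intros Hp. replace (/ qpoch p p k) with (/ qpoch p p k * 1) by ring.
  apply cvC_ext with (fun N => / qpoch p p k * qfall p N k).
  intros. unfold qbinom, Cdiv. ring.
  apply cvC_scal. apply qfall_cv; auto.
Qed.

Lemma Cmod_qbinom_rprod_le p N k : (Cmod p < 1)%R ->
  (Cmod (qbinom p N k) * rprod (fun i => 1 - Cmod p ^ S i)%R k <= 1)%R.
Proof.
  intros Hp. assert (Hr : (0 <= Cmod p)%R) by apply Cmod_ge_0.
  set (Pk := rprod (fun i => 1 - Cmod p ^ S i)%R).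
  assert (Hf : forall i, (0 <= 1 - Cmod p ^ S i <= 1)%R).
  { intros i. assert (0 <= Cmod p ^ S i)%R by (apply pow_le; lra).
    assert (Cmod p ^ S i < 1)%R by (apply pow_lt_1_compat; [lra|lia]). lra. }
  revert k. induction N; intros [|j].
  - rewrite qbinom_0, Cmod_1. unfold Pk. simpl. lra.
  - rewrite qbinom_gt, Cmod_0 by lia. lra.
  - rewrite qbinom_0, Cmod_1. unfold Pk. simpl. lra.
  - rewrite qbinom_pascal by auto.
    pose proof (IHN j) as H1. pose proof (IHN (S j)) as H2.
    change (Pk (S j)) with (Pk j * (1 - Cmod p ^ S j))%R in *.
    assert (0 <= Pk j)%R by (apply rprod_nonneg; intros; apply Hf).
    pose proof (Hf j).
    assert (Cmod (qbinom p N j + cpow p (S j) * qbinom p N (S j))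
            <= Cmod (qbinom p N j) + Cmod p ^ S j * Cmod (qbinom p N (S j)))%R.
    { eapply Rle_trans. apply Cmod_triangle. rewrite Cmod_mult, Cmod_cpow. lra. }
    set (s := (Cmod p ^ S j)%R) in *.
    set (a := Cmod (qbinom p N j)) in *. set (b := Cmod (qbinom p N (S j))) in *.
    assert (0 <= s)%R by (apply pow_le; lra).
    assert (0 <= a)%R by apply Cmod_ge_0. assert (0 <= b)%R by apply Cmod_ge_0.
    apply Rle_trans with ((a + s * b) * (Pk j * (1 - s)))%R.
    { apply Rmult_le_compat_r. apply Rmult_le_pos; lra. auto. }
    assert (a * Pk j * (1 - s) <= 1 * (1 - s))%R by (apply Rmult_le_compat_r; lra).
    assert (s * (b * (Pk j * (1 - s))) <= s * 1)%R by (apply Rmult_le_compat_l; lra).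
    nra.
Qed.

Lemma qbinom_bounded p : (Cmod p < 1)%R ->
  exists B, (0 < B)%R /\ forall N k, (Cmod (qbinom p N k) <= B)%R.
Proof.
  intros Hp. assert (Hr : (0 <= Cmod p)%R) by apply Cmod_ge_0.
  destruct (rprod_one_minus_lower_bound (fun i => Cmod p ^ (S i))%R) as [L [HL HLn]].
  { intros i. split. apply pow_le; lra. apply pow_lt_1_compat; [lra|lia]. }
  { apply summable_le with (fun i => Cmod p * Cmod p ^ i)%R.
    intros; apply pow_le; lra. intros; simpl; lra.
    apply summable_scal; auto. apply summable_geom; lra. }
  exists (/ L)%R. split. apply Rinv_0_lt_compat; auto. intros N k.
  pose proof (Cmod_qbinom_rprod_le p N k Hp). specialize (HLn k).
  assert (0 <= Cmod (qbinom p N k))%R by apply Cmod_ge_0.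
  apply Rmult_le_reg_r with L; auto. rewrite Rinv_l by lra.
  apply Rle_trans with (Cmod (qbinom p N k) * rprod (fun i => 1 - Cmod p ^ S i)%R k)%R; auto.
  apply Rmult_le_compat_l; auto.
Qed.

Lemma q_binomial_theorem p x N : (Cmod p < 1)%R ->
  qpoch (- x) p N = csum (fun k => qbinom p N k * cpow p (tri k) * cpow x k) (S N).
Proof.
  intros Hp. revert x. induction N; intros x.
  - simpl. rewrite qbinom_0, qpoch_0. simpl. ring.
  - rewrite qpoch_shift. replace (- x * p) with (- (p * x)) by ring. rewrite (IHN (p * x)).
    set (A := fun k => qbinom p N k * cpow p (tri k) * cpow (p * x) k).
    rewrite (csum_shift (fun k => qbinom p (S N) k * cpow p (tri k) * cpow x k) (S N)). cbv beta.
    rewrite (csum_ext (fun k => qbinom p (S N) (S k) * cpow p (tri (S k)) * cpow x (S k))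
                      (fun k => x * A k + A (S k))).
    2: { intros k Hk. unfold A. rewrite qbinom_pascal by auto. simpl tri.
         rewrite !cpow_add, !cpow_mult. simpl cpow. ring. }
    rewrite csum_plus, csum_scal, csum_shift_r.
    change (csum A (S (S N))) with (csum A (S N) + A (S N)).
    assert (A (S N) = 0) as ->. { unfold A. rewrite qbinom_gt by lia. ring. }
    assert (A O = 1) as ->. { unfold A. rewrite qbinom_0. simpl. ring. }
    rewrite qbinom_0. simpl. ring.
Qed.

Lemma euler_identity p x : (Cmod p < 1)%R -> (Cmod x < 1)%R ->
  exists E, cvC (qpoch (-x) p) E /\ seriesC (fun k => cpow p (tri k) * cpow x k / qpoch p p k) E.
Proof.
  intros Hp Hx. assert (Hmx : (Cmod (-x) < 1)%R) by (rewrite Cmod_opp; auto).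
  destruct (qpoch_cv (-x) p Hmx Hp) as [L0 [E0 [_ [HE0 _]]]].
  destruct (qbinom_bounded p Hp) as [B [HB HBn]].
  destruct (tannery (fun N k => qbinom p N k * cpow p (tri k) * cpow x k)
                    (fun k => / qpoch p p k * cpow p (tri k) * cpow x k)
                    (fun k => B * Cmod p ^ tri k * Cmod x ^ k)%R S) as [l [Hl1 Hl2]].
  { intros k. apply cvC_mult. apply cvC_mult. apply qbinom_cv; auto.
    apply cvC_const. apply cvC_const. }
  { intros N k. rewrite !Cmod_mult, !Cmod_cpow. pose proof (HBn N k).
    assert (0 <= Cmod p ^ tri k)%R by (apply pow_le; apply Cmod_ge_0).
    assert (0 <= Cmod x ^ k)%R by (apply pow_le; apply Cmod_ge_0).
    assert (0 <= Cmod (qbinom p N k))%R by apply Cmod_ge_0.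
    apply Rmult_le_compat; auto. apply Rmult_le_pos; auto. apply Rmult_le_compat; lra. lra. }
  { apply summable_tri_geom. lra. split; auto. apply Cmod_ge_0. apply Cmod_ge_0. }
  { intros; lia. }
  assert (l = E0) as <-.
  { apply (cvC_unique (qpoch (-x) p)); auto.
    apply cvC_ext with (fun N => csum (fun k => qbinom p N k * cpow p (tri k) * cpow x k) (S N)); auto.
    intros. symmetry. apply q_binomial_theorem; auto. }
  exists l. split; auto.
  apply seriesC_ext with (fun k => / qpoch p p k * cpow p (tri k) * cpow x k); auto.
  intros. unfold Cdiv. ring.
Qed.

(** * Bailey pairs certified by telescoping *)

Definition bailey_kernel (p a : C) (n r : nat) : C :=
  / (qpoch p p (n - r) * qpoch (a * p) p (n + r)).

Definition bailey_pair (p a : C) (al be : nat -> C) : Prop :=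
  forall n, csum (fun r => al r * bailey_kernel p a n r) (S n) = be n.

(* Induction on [n]: the sum for [n + 1] minus [ratio n] times the sum for [n]
   telescopes, [cert n r] being the partial sum of its first [r] terms; so
   [cert n 0 = 0], and the last hypothesis says that the whole sum vanishes. *)
Lemma bailey_pair_by_certificate p a (al be ratio : nat -> C) (cert : nat -> nat -> C) :
  al O * bailey_kernel p a O O = be O ->
  (forall n, be (S n) = ratio n * be n) ->
  (forall n, al O * bailey_kernel p a (S n) O - ratio n * (al O * bailey_kernel p a n O)
             = cert n 1%nat) ->
  (forall r s, let n := (S r + s)%nat in
     al (S r) * bailey_kernel p a (S n) (S r) - ratio n * (al (S r) * bailey_kernel p a n (S r))
     = cert n (S (S r)) - cert n (S r)) ->
  (forall n, al (S n) * bailey_kernel p a (S n) (S n) = - cert n (S n)) ->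
  bailey_pair p a al be.
Proof.
  intros H0 Hbe Hzero Hstep Hlast n. induction n as [|n IH].
  { simpl. rewrite <- H0. ring. }
  set (G := fun r => match r with O => 0 | S _ => if Nat.leb r (S n) then cert n r else 0 end : C).
  assert (Hdiff : forall r, (r <= n)%nat ->
            al r * bailey_kernel p a (S n) r
            = ratio n * (al r * bailey_kernel p a n r) + (G (S r) - G r)).
  { intros [|r] Hr; unfold G.
    - replace (Nat.leb 1 (S n)) with true by (symmetry; apply Nat.leb_le; lia).
      rewrite <- Hzero. ring.
    - replace (Nat.leb (S (S r)) (S n)) with true by (symmetry; apply Nat.leb_le; lia).
      replace (Nat.leb (S r) (S n)) with true by (symmetry; apply Nat.leb_le; lia).
      destruct (Nat.le_exists_sub (S r) n Hr) as [s [-> _]].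
      replace (s + S r)%nat with (S r + s)%nat by lia. rewrite <- (Hstep r s). ring. }
  change (csum (fun r => al r * bailey_kernel p a (S n) r) (S (S n)))
    with (csum (fun r => al r * bailey_kernel p a (S n) r) (S n)
          + al (S n) * bailey_kernel p a (S n) (S n)).
  rewrite (csum_ext _ (fun r => ratio n * (al r * bailey_kernel p a n r) + (G (S r) - G r)))
    by (intros; apply Hdiff; lia).
  rewrite csum_plus, csum_scal, csum_telescope, IH, Hbe, Hlast. unfold G.
  replace (Nat.leb (S n) (S n)) with true by (symmetry; apply Nat.leb_le; lia). ring.
Qed.

(** * The Jacobi triple product *)

Definition jtp_alpha (z w : C) (r : nat) : C :=
  match r with O => 1 | S _ => cpow (-1) r * cpow (z * w) (tri r) * (cpow z r + cpow w r) end.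

Definition jtp_beta (z w : C) (n : nat) : C :=
  qpoch z (z * w) n * qpoch w (z * w) n / qpoch (z * w) (z * w) (n + n).

Definition jtp_ratio (z w : C) (n : nat) : C :=
  (1 - z * cpow (z * w) n) * (1 - w * cpow (z * w) n) /
  ((1 - (z * w) * cpow (z * w) (n + n)) * (1 - (z * w) * (z * w) * cpow (z * w) (n + n))).

Definition jtp_cert (z w : C) (n r : nat) : C :=
  cpow (-1) r * cpow (z * w) (tri r)
  / (qpoch (z * w) (z * w) (n + r) * qpoch (z * w) (z * w) (S n - r)) *
  (- cpow (z * w) (S n - r) * cpow z r * (1 - w * cpow (z * w) n)
   - cpow (z * w) (S n - r) * cpow w r * (1 - z * cpow (z * w) n)
   - w * cpow (z * w) n * cpow z r * (1 - z * cpow (z * w) n)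
   - z * cpow (z * w) n * cpow w r * (1 - w * cpow (z * w) n))
  / ((1 - (z * w) * cpow (z * w) (n + n)) * (1 - (z * w) * (z * w) * cpow (z * w) (n + n))).

Lemma one_minus_mult_cpow_neq_0 P k : (Cmod P < 1)%R -> 1 - P * cpow P k <> 0.
Proof. intros. apply one_minus_neq_0, Cmod_mult_cpow_lt_1; auto. Qed.

Lemma one_minus_sq_cpow_neq_0 P k : (Cmod P < 1)%R -> 1 - P * P * cpow P k <> 0.
Proof.
  intros. replace (P * P * cpow P k) with (P * cpow P (S k)) by (simpl; ring).
  apply one_minus_mult_cpow_neq_0; auto.
Qed.

Section JacobiTripleProduct.

Variables z w : C.
Hypothesis Hz : (Cmod z < 1)%R.
Hypothesis Hw : (Cmod w < 1)%R.

Let HP : (Cmod (z * w) < 1)%R := Cmod_lt_1_mult z w Hz Hw.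

Lemma jtp_cert_zero n :
  jtp_alpha z w O * bailey_kernel (z * w) 1 (S n) O
  - jtp_ratio z w n * (jtp_alpha z w O * bailey_kernel (z * w) 1 n O) = jtp_cert z w n 1%nat.
Proof.
  unfold jtp_alpha, bailey_kernel, jtp_ratio, jtp_cert. rewrite !Cmult_1_l.
  rewrite !Nat.sub_0_r, !Nat.add_0_r. replace (S n - 1)%nat with n by lia. rewrite Nat.add_1_r.
  simpl tri. rewrite !qpoch_S.
  assert (H1 : qpoch (z * w) (z * w) n <> 0) by (apply qpoch_neq_0; auto).
  assert (H2 := one_minus_mult_cpow_neq_0 (z * w) n HP).
  assert (H3 := one_minus_mult_cpow_neq_0 (z * w) (n + n) HP).
  assert (H4 := one_minus_sq_cpow_neq_0 (z * w) (n + n) HP).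
  normcpow. field; repeat split; auto.
Qed.

Lemma jtp_cert_step r s : let n := (S r + s)%nat in
  jtp_alpha z w (S r) * bailey_kernel (z * w) 1 (S n) (S r)
  - jtp_ratio z w n * (jtp_alpha z w (S r) * bailey_kernel (z * w) 1 n (S r))
  = jtp_cert z w n (S (S r)) - jtp_cert z w n (S r).
Proof.
  intros n. unfold n, jtp_alpha, bailey_kernel, jtp_ratio, jtp_cert. rewrite !Cmult_1_l.
  replace (S (S r + s) - S r)%nat with (S s) by lia.
  replace (S (S r + s) + S r)%nat with (S (S (S (r + r + s)))) by lia.
  replace (S r + s - S r)%nat with s by lia.
  replace (S r + s + S r)%nat with (S (S (r + r + s))) by lia.
  replace (S r + s + S (S r))%nat with (S (S (S (r + r + s)))) by lia.
  replace (S (S r + s) - S (S r))%nat with s by lia.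
  replace (S r + s + (S r + s))%nat with (S (S (r + r + s + s))) by lia.
  simpl tri. rewrite !qpoch_S.
  assert (H1 : qpoch (z * w) (z * w) s <> 0) by (apply qpoch_neq_0; auto).
  assert (H2 : qpoch (z * w) (z * w) (r + r + s) <> 0) by (apply qpoch_neq_0; auto).
  assert (H3 : forall k, 1 - z * w * cpow (z * w) k <> 0)
    by (intros; apply one_minus_mult_cpow_neq_0; auto).
  assert (H4 : forall k, 1 - z * w * (z * w) * cpow (z * w) k <> 0)
    by (intros; apply one_minus_sq_cpow_neq_0; auto).
  assert (H5 := H3 s). assert (H6 := H3 (r + r + s)%nat).
  assert (H7 := H3 (S (r + r + s))). assert (H8 := H3 (S (S (r + r + s)))).
  assert (H9 := H3 (S (S (r + r + s + s)))). assert (H10 := H4 (S (S (r + r + s + s)))).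
  clear H3 H4.
  normcpow. field; repeat split; auto.
Qed.

Lemma jtp_cert_last n :
  jtp_alpha z w (S n) * bailey_kernel (z * w) 1 (S n) (S n) = - jtp_cert z w n (S n).
Proof.
  unfold jtp_alpha, bailey_kernel, jtp_ratio, jtp_cert. rewrite !Cmult_1_l.
  rewrite !Nat.sub_diag. replace (S n + S n)%nat with (S (S (n + n))) by lia.
  replace (n + S n)%nat with (S (n + n)) by lia.
  simpl tri. rewrite !qpoch_S, qpoch_0.
  assert (H1 : qpoch (z * w) (z * w) (n + n) <> 0) by (apply qpoch_neq_0; auto).
  assert (H2 := one_minus_mult_cpow_neq_0 (z * w) (n + n) HP).
  assert (H3 := one_minus_mult_cpow_neq_0 (z * w) (S (n + n)) HP).
  assert (H4 := one_minus_sq_cpow_neq_0 (z * w) (n + n) HP).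
  normcpow. field; repeat split; auto.
Qed.

Lemma jtp_beta_S n : jtp_beta z w (S n) = jtp_ratio z w n * jtp_beta z w n.
Proof.
  unfold jtp_beta, jtp_ratio. replace (S n + S n)%nat with (S (S (n + n))) by lia.
  rewrite !qpoch_S.
  assert (H1 : qpoch (z * w) (z * w) (n + n) <> 0) by (apply qpoch_neq_0; auto).
  assert (H2 := one_minus_mult_cpow_neq_0 (z * w) (n + n) HP).
  assert (H3 := one_minus_mult_cpow_neq_0 (z * w) (S (n + n)) HP).
  assert (H4 := one_minus_sq_cpow_neq_0 (z * w) (n + n) HP).
  rewrite cpow_S in H3 |- *. field; repeat split; auto.
Qed.

Lemma jtp_bailey_pair : bailey_pair (z * w) 1 (jtp_alpha z w) (jtp_beta z w).
Proof.
  apply bailey_pair_by_certificate with (jtp_ratio z w) (jtp_cert z w).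
  - unfold jtp_alpha, jtp_beta, bailey_kernel. simpl. rewrite !qpoch_0. field.
  - apply jtp_beta_S.
  - apply jtp_cert_zero.
  - apply jtp_cert_step.
  - apply jtp_cert_last.
Qed.

End JacobiTripleProduct.

Lemma bailey_pair_cv p a (al be : nat -> C) (M : nat -> R) :
  (Cmod p < 1)%R -> (Cmod (a * p) < 1)%R -> bailey_pair p a al be ->
  (forall r, Cmod (al r) <= M r)%R -> summable M ->
  exists Lp Lap s, cvC (qpoch p p) Lp /\ cvC (qpoch (a * p) p) Lap /\ Lp <> 0 /\ Lap <> 0 /\
    seriesC al s /\ cvC be (s / (Lp * Lap)).
Proof.
  intros Hp Hap Hpair Hal HM.
  destruct (qpoch_cv p p Hp Hp) as [L1 [Lp [HL1 [HLp [Hlow1 [_ HLp1]]]]]].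
  destruct (qpoch_cv (a * p) p Hap Hp) as [L2 [Lap [HL2 [HLap [Hlow2 [_ HLap2]]]]]].
  assert (HLp0 : Lp <> 0) by (intro E; rewrite E, Cmod_0 in HLp1; lra).
  assert (HLap0 : Lap <> 0) by (intro E; rewrite E, Cmod_0 in HLap2; lra).
  assert (HL : (0 < L1 * L2)%R) by nra.
  destruct (tannery (fun N r => al r * bailey_kernel p a N r) (fun r => al r * / (Lp * Lap))
              (fun r => / (L1 * L2) * M r)%R S) as [l [Hl1 Hl2]].
  - intros r. apply cvC_scal. unfold bailey_kernel. apply cvC_inv. 2: apply Cmult_neq_0; auto.
    apply cvC_mult. apply cvC_sub_shift; auto.
    apply cvC_subseq with (h := fun N => (N + r)%nat); auto. intros; lia.
  - intros N r. unfold bailey_kernel. rewrite Cmod_mult, Cmod_inv, Cmod_mult, Rmult_comm.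
    2: apply Cmult_neq_0; apply qpoch_neq_0; auto.
    pose proof (Hlow1 (N - r)%nat). pose proof (Hlow2 (N + r)%nat).
    assert (L1 * L2 <= Cmod (qpoch p p (N - r)) * Cmod (qpoch (a * p) p (N + r)))%R
      by (apply Rmult_le_compat; lra).
    apply Rmult_le_compat; try apply Cmod_ge_0; auto.
    + left. apply Rinv_0_lt_compat. nra.
    + apply Rinv_le_contravar; auto.
  - apply summable_scal; auto. left. apply Rinv_0_lt_compat; auto.
  - intros; lia.
  - exists Lp, Lap, (l * (Lp * Lap)). repeat split; auto.
    + apply seriesC_ext with (fun r => (Lp * Lap) * (al r * / (Lp * Lap))).
      { intros r. field. auto. }
      replace (l * (Lp * Lap)) with ((Lp * Lap) * l) by ring. apply seriesC_scal. auto.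
    + replace (l * (Lp * Lap) / (Lp * Lap)) with l by (field; auto).
      apply cvC_ext with (fun N => csum (fun r => al r * bailey_kernel p a N r) (S N)); auto.
Qed.

Lemma Cmod_jtp_alpha_le z w r : (Cmod z < 1)%R -> (Cmod w < 1)%R ->
  (Cmod (jtp_alpha z w r) <= 2 * Cmod (z * w) ^ tri r)%R.
Proof.
  intros Hz Hw. destruct r. simpl. rewrite Cmod_1. lra.
  unfold jtp_alpha. set (P := z * w). rewrite !Cmod_mult, Cmod_cpow_m1, Cmod_cpow.
  assert (Cmod (cpow z (S r) + cpow w (S r)) <= 2)%R.
  { eapply Rle_trans. apply Cmod_triangle.
    pose proof (Cmod_cpow_le_1 z (S r) (Rlt_le _ _ Hz)).
    pose proof (Cmod_cpow_le_1 w (S r) (Rlt_le _ _ Hw)). lra. }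
  assert (0 <= Cmod P ^ tri (S r))%R by (apply pow_le; apply Cmod_ge_0). nra.
Qed.

Theorem jacobi_triple_product z w : (Cmod z < 1)%R -> (Cmod w < 1)%R ->
  exists Lz Lw LP s, cvC (qpoch z (z * w)) Lz /\ cvC (qpoch w (z * w)) Lw /\
    cvC (qpoch (z * w) (z * w)) LP /\ seriesC (jtp_alpha z w) s /\ s = Lz * Lw * LP.
Proof.
  intros Hz Hw. assert (HP := Cmod_lt_1_mult z w Hz Hw).
  destruct (qpoch_cv z (z * w) Hz HP) as [_ [Lz [_ [Hz1 _]]]].
  destruct (qpoch_cv w (z * w) Hw HP) as [_ [Lw [_ [Hw1 _]]]].
  destruct (bailey_pair_cv (z * w) 1 (jtp_alpha z w) (jtp_beta z w)
              (fun r => 2 * Cmod (z * w) ^ tri r * 1 ^ r)%R)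
    as [LP [LP' [s [HLP [HLP' [HLP0 [_ [Hs Hbe]]]]]]]].
  - auto.
  - rewrite Cmult_1_l. auto.
  - apply jtp_bailey_pair; auto.
  - intros r. rewrite pow1, Rmult_1_r. apply Cmod_jtp_alpha_le; auto.
  - apply summable_tri_geom; try lra. split; auto. apply Cmod_ge_0.
  - rewrite Cmult_1_l in HLP'. assert (LP' = LP) as -> by (apply (cvC_unique _ _ _ HLP' HLP)).
    exists Lz, Lw, LP, s. repeat split; auto.
    assert (Hlim : cvC (jtp_beta z w) (Lz * Lw / LP)).
    { unfold jtp_beta. apply cvC_mult. apply cvC_mult; auto. apply cvC_inv; auto.
      apply cvC_subseq with (h := fun n => (n + n)%nat); auto. intros; lia. }
    assert (E := cvC_unique _ _ _ Hbe Hlim).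
    apply (f_equal (fun x => x * (LP * LP))) in E.
    replace (s / (LP * LP) * (LP * LP)) with s in E by (field; auto). rewrite E. field. auto.
Qed.

Definition theta_half (z w : C) (k : nat) : C := cpow (-1) k * cpow (z * w) (tri k) * cpow z k.

Lemma theta_half_cv z w : (Cmod z < 1)%R -> (Cmod w < 1)%R -> exists U, seriesC (theta_half z w) U.
Proof.
  intros Hz Hw. apply seriesC_abs_conv with (fun k => 1 * Cmod (z * w) ^ tri k * 1 ^ k)%R.
  - intros k. unfold theta_half. rewrite !Cmod_mult, Cmod_cpow_m1, !Cmod_cpow, pow1, <- Cmod_mult.
    assert (0 <= Cmod z)%R by apply Cmod_ge_0.
    assert (Cmod z ^ k <= 1)%R by (rewrite <- Cmod_cpow; apply Cmod_cpow_le_1; lra).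
    assert (0 <= Cmod (z * w) ^ tri k)%R by (apply pow_le; apply Cmod_ge_0). nra.
  - apply summable_tri_geom. lra. split. apply Cmod_ge_0. apply Cmod_lt_1_mult; auto. lra.
Qed.

Lemma seriesC_change_first f g l :
  seriesC f l -> (forall r, g (S r) = f (S r)) -> seriesC g (l + (g O - f O)).
Proof.
  intros Hf Hg. apply cvC_ext_eventually with (fun n => csum f n + (g O - f O)).
  - exists 1%nat. intros [|n] Hn. lia.
    rewrite !csum_shift, (csum_ext (fun k => g (S k)) (fun k => f (S k))) by auto. ring.
  - apply cvC_plus; auto. apply cvC_const.
Qed.

Lemma jtp_alpha_series_split z w s : (Cmod z < 1)%R -> (Cmod w < 1)%R ->
  seriesC (jtp_alpha z w) s ->
  exists U V, seriesC (theta_half z w) U /\ seriesC (theta_half w z) V /\ s = U + V - 1.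
Proof.
  intros Hz Hw Hs. destruct (theta_half_cv z w Hz Hw) as [U HU].
  destruct (theta_half_cv w z Hw Hz) as [V HV].
  exists U, V. repeat split; auto. apply (seriesC_unique (jtp_alpha z w)); auto.
  replace (U + V - 1) with ((U + V) + (jtp_alpha z w O - (theta_half z w O + theta_half w z O)))
    by (unfold theta_half; simpl; ring).
  apply (seriesC_change_first (fun r => theta_half z w r + theta_half w z r)).
  apply seriesC_plus; auto.
  intros r. unfold theta_half, jtp_alpha. replace (w * z) with (z * w) by ring. ring.
Qed.

(** * Bailey's lemma *)

Lemma csum_triangle_swap (H : nat -> nat -> C) N :
  csum (fun n => csum (fun r => H n r) (S n)) (S N)
  = csum (fun r => csum (fun m => H (r + m)%nat r) (S (N - r))) (S N).
Proof.
  induction N.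
  - simpl. ring_simplify. auto.
  - change (csum (fun n => csum (fun r => H n r) (S n)) (S (S N))) with
      (csum (fun n => csum (fun r => H n r) (S n)) (S N) + csum (fun r => H (S N) r) (S (S N))).
    rewrite IHN.
    change (csum (fun r => csum (fun m => H (r + m)%nat r) (S (S N - r))) (S (S N))) with
      (csum (fun r => csum (fun m => H (r + m)%nat r) (S (S N - r))) (S N)
       + csum (fun m => H (S N + m)%nat (S N)) (S (S N - S N))).
    rewrite (csum_ext (fun r => csum (fun m => H (r + m)%nat r) (S (S N - r)))
                      (fun r => csum (fun m => H (r + m)%nat r) (S (N - r)) + H (S N) r)).
    2: { intros r Hr. replace (S N - r)%nat with (S (N - r)) by lia.
         simpl csum at 1. f_equal. f_equal. lia. }
    rewrite csum_plus, Nat.sub_diag.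
    replace (csum (fun m => H (S N + m)%nat (S N)) 1) with (H (S N) (S N))
      by (simpl; rewrite Nat.add_0_r; ring).
    change (csum (fun r => H (S N) r) (S (S N))) with (csum (fun r => H (S N) r) (S N) + H (S N) (S N)).
    rewrite Cplus_assoc. reflexivity.
Qed.

(* The finite identity behind Bailey's lemma in the limit [rho1, rho2 -> oo]. *)
Lemma qbinom_sum_one p c M : (Cmod p < 1)%R ->
  csum (fun m => cpow p (m * m) * cpow c m * qbinom p M m * qpoch (c * cpow p (S m)) p (M - m)) (S M)
  = 1.
Proof.
  intros Hp. revert c. induction M; intros c.
  { simpl. rewrite qbinom_0, qpoch_0. simpl. ring. }
  rewrite <- (IHM (c * p)).
  set (T := fun m => cpow p (m * m) * cpow (c * p) m * qbinom p M m
                     * qpoch (c * p * cpow p (S m)) p (M - m)).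
  set (F := fun m => cpow p (m * m) * cpow c m * cpow p m * qbinom p M m
                     * qpoch (c * cpow p (S m)) p (S M - m)).
  set (V := fun j => cpow p (S j * S j) * cpow c (S j) * qbinom p M j
                     * qpoch (c * p * cpow p (S j)) p (M - j)).
  rewrite csum_shift.
  rewrite (csum_ext (fun k => cpow p (S k * S k) * cpow c (S k) * qbinom p (S M) (S k)
                              * qpoch (c * cpow p (S (S k))) p (S M - S k))
                    (fun k => V k + F (S k))).
  2: { intros k Hk. unfold V, F. rewrite qbinom_pascal by auto.
       replace (c * cpow p (S (S k))) with (c * p * cpow p (S k)) by (simpl; ring).
       replace (S M - S k)%nat with (M - k)%nat by lia. ring. }
  rewrite csum_plus, csum_shift_r.
  change (csum F (S (S M))) with (csum F (S M) + F (S M)).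
  assert (F (S M) = 0) as ->. { unfold F. rewrite qbinom_gt by lia. ring. }
  assert (E : csum F (S M) = csum (fun m => T m + (-1) * V m) (S M)).
  { apply csum_ext. intros m Hm. unfold F, T, V. replace (S M - m)%nat with (S (M - m)) by lia.
    rewrite qpoch_shift. replace (c * cpow p (S m) * p) with (c * p * cpow p (S m)) by ring.
    rewrite cpow_sq_S, cpow_mult. simpl cpow. ring. }
  rewrite E, csum_plus, csum_scal.
  unfold F. simpl. rewrite !qbinom_0. ring.
Qed.

Lemma bailey_inner p a (al : C) r M : (Cmod p < 1)%R -> (Cmod (a * p) < 1)%R ->
  csum (fun m => cpow a (r + m) * cpow p ((r + m) * (r + m)) * / qpoch p p (r + M - (r + m))
                 * (al * bailey_kernel p a (r + m) r)) (S M)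
  = cpow a r * cpow p (r * r) * al * bailey_kernel p a (r + M) r.
Proof.
  intros Hp Hap.
  rewrite <- (Cmult_1_r (cpow a r * cpow p (r * r) * al * bailey_kernel p a (r + M) r)).
  rewrite <- (qbinom_sum_one p (a * cpow p (r + r)) M Hp), <- csum_scal.
  apply csum_ext. intros m Hm. destruct (Nat.le_exists_sub m M ltac:(lia)) as [t [-> _]].
  rewrite qbinom_qpoch by (auto; lia). unfold bailey_kernel.
  replace (r + (t + m) - (r + m))%nat with t by lia. replace (r + m - r)%nat with m by lia.
  replace (t + m - m)%nat with t by lia. replace (r + (t + m) - r)%nat with (t + m)%nat by lia.
  replace (r + (t + m) + r)%nat with ((r + m + r) + t)%nat by lia.
  rewrite (qpoch_add (a * p) p (r + m + r) t).
  replace (a * p * cpow p (r + m + r)) with (a * cpow p (r + r) * cpow p (S m)) by (normcpow; ring).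
  assert (H1 : qpoch p p t <> 0) by (apply qpoch_neq_0; auto).
  assert (H2 : qpoch p p m <> 0) by (apply qpoch_neq_0; auto).
  assert (H3 : qpoch p p (t + m) <> 0) by (apply qpoch_neq_0; auto).
  assert (H4 : qpoch (a * p) p (r + m + r) <> 0) by (apply qpoch_neq_0; auto).
  assert (H5 : qpoch (a * cpow p (r + r) * cpow p (S m)) p t <> 0).
  { replace (a * cpow p (r + r) * cpow p (S m)) with (a * p * cpow p (r + m + r)) by (normcpow; ring).
    apply qpoch_neq_0; auto. apply Cmod_mult_cpow_lt_1; auto. }
  replace ((r + m) * (r + m))%nat with (r * r + m * m + (r + r) * m)%nat by nia.
  rewrite (cpow_mult a (cpow p (r + r)) m), <- (cpow_mul p (r + r) m).
  rewrite !cpow_add in *. field. repeat split; auto.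
Qed.

Lemma bailey_finite p a (al be : nat -> C) N : (Cmod p < 1)%R -> (Cmod (a * p) < 1)%R ->
  bailey_pair p a al be ->
  csum (fun n => cpow a n * cpow p (n * n) * (be n * qfall p N n)) (S N)
  = csum (fun r => cpow a r * cpow p (r * r) * (al r * (qfall p N r * / qpoch (a * p) p (N + r)))) (S N).
Proof.
  intros Hp Hap Hpair.
  assert (Hqp : forall k, qpoch p p k <> 0) by (intros; apply qpoch_neq_0; auto).
  rewrite (csum_ext _ (fun n => qpoch p p N * csum (fun r => cpow a n * cpow p (n * n)
                                   * / qpoch p p (N - n) * (al r * bailey_kernel p a n r)) (S n))).
  2: { intros n Hn. rewrite csum_scal, Hpair, <- (qfall_qpoch p N n) by lia. field. auto. }
  rewrite csum_scal, csum_triangle_swap, <- csum_scal. apply csum_ext. intros r Hr.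
  destruct (Nat.le_exists_sub r N ltac:(lia)) as [M [-> _]].
  replace (M + r - r)%nat with M by lia. replace (M + r)%nat with (r + M)%nat by lia.
  rewrite bailey_inner by auto. unfold bailey_kernel.
  rewrite <- (qfall_qpoch p (r + M) r) by lia. replace (r + M - r)%nat with M by lia.
  field. split; auto. apply qpoch_neq_0; auto.
Qed.

Lemma Cmod_bailey_term_le (a p b : C) n B : (Cmod a <= 1)%R -> (Cmod b <= B * 2 ^ n)%R ->
  (Cmod (cpow a n * cpow p (n * n) * b) <= B * (Cmod p ^ 2) ^ tri n * (2 * Cmod p) ^ n)%R.
Proof.
  intros Ha Hb. rewrite !Cmod_mult.
  assert (Cmod (cpow a n) <= 1)%R by (apply Cmod_cpow_le_1; auto).
  assert (0 <= Cmod (cpow a n))%R by apply Cmod_ge_0.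
  rewrite (Cmod_cpow p), <- tri_spec, pow_add, pow_mult, Rpow_mult_distr.
  assert (0 <= Cmod p)%R by apply Cmod_ge_0.
  assert (0 <= (Cmod p ^ 2) ^ tri n * Cmod p ^ n)%R by (apply Rmult_le_pos; repeat apply pow_le; lra).
  assert (0 <= Cmod b)%R by apply Cmod_ge_0.
  apply Rle_trans with (1 * ((Cmod p ^ 2) ^ tri n * Cmod p ^ n) * (B * 2 ^ n))%R.
  - apply Rmult_le_compat; auto. apply Rmult_le_pos; auto. apply Rmult_le_compat_r; auto.
  - right. ring.
Qed.

(* The weight [a^n p^(n^2)] beats the growth [2^n] of [qfall p N n]. *)
Lemma bailey_tannery p a (u : nat -> nat -> C) (v : nat -> C) B :
  (Cmod p < 1)%R -> (Cmod a <= 1)%R -> (0 <= B)%R ->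
  (forall n, cvC (fun N => u N n) (v n)) -> (forall N n, Cmod (u N n) <= B * 2 ^ n)%R ->
  exists l, seriesC (fun n => cpow a n * cpow p (n * n) * v n) l /\
    cvC (fun N => csum (fun n => cpow a n * cpow p (n * n) * u N n) (S N)) l.
Proof.
  intros Hp Ha HB Hu Hbound. assert (0 <= Cmod p)%R by apply Cmod_ge_0.
  apply tannery with (fun n => B * (Cmod p ^ 2) ^ tri n * (2 * Cmod p) ^ n)%R.
  - intros n. apply cvC_scal, Hu.
  - intros N n. apply Cmod_bailey_term_le; auto.
  - apply summable_tri_geom; auto. split. apply pow_le; lra. simpl. nra. lra.
  - intros; lia.
Qed.

(* Bailey's lemma with [rho1, rho2 -> oo]: multiply the pair relation by
   [(p;p)_N a^n p^(n^2) / (p;p)_(N-n)], sum over [n <= N], exchange the sums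
   ([bailey_finite]) and let [N -> oo] on both sides ([qfall p N n -> 1]). *)
Theorem bailey_lemma p a (al be : nat -> C) Bal Bbe :
  (Cmod p < 1)%R -> (Cmod a <= 1)%R -> (Cmod (a * p) < 1)%R -> bailey_pair p a al be ->
  (forall n, Cmod (be n) <= Bbe)%R -> (forall r, Cmod (al r) <= Bal)%R ->
  exists SL SR Lap, seriesC (fun n => cpow a n * cpow p (n * n) * be n) SL /\
    seriesC (fun r => cpow a r * cpow p (r * r) * al r) SR /\
    cvC (qpoch (a * p) p) Lap /\ SL * Lap = SR.
Proof.
  intros Hp Ha Hap Hpair Hbe Hal.
  assert (HBbe : (0 <= Bbe)%R) by (eapply Rle_trans; [apply Cmod_ge_0 | apply (Hbe O)]).
  assert (HBal : (0 <= Bal)%R) by (eapply Rle_trans; [apply Cmod_ge_0 | apply (Hal O)]).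
  destruct (qpoch_cv (a * p) p Hap Hp) as [L [Lap [HL [HLap [HLlow [_ HLl]]]]]].
  assert (HLap0 : Lap <> 0) by (intro E; rewrite E, Cmod_0 in HLl; lra).
  destruct (bailey_tannery p a (fun N n => be n * qfall p N n) be Bbe) as [l1 [Hl1 Hlim1]]; auto.
  { intros n. pose proof (cvC_scal (be n) _ _ (qfall_cv p n Hp)) as H.
    rewrite Cmult_1_r in H. exact H. }
  { intros N n. rewrite Cmod_mult. pose proof (qfall_Cmod_le p N n Hp).
    pose proof (Cmod_ge_0 (be n)). pose proof (Cmod_ge_0 (qfall p N n)). specialize (Hbe n). nra. }
  destruct (bailey_tannery p a (fun N r => al r * (qfall p N r * / qpoch (a * p) p (N + r)))
              (fun r => al r * / Lap) (Bal / L)) as [l2 [Hl2 Hlim2]]; auto.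
  { unfold Rdiv. apply Rmult_le_pos; auto. left; apply Rinv_0_lt_compat; auto. }
  { intros r. apply cvC_scal. rewrite <- (Cmult_1_l (/ Lap)). apply cvC_mult.
    apply qfall_cv; auto. apply cvC_inv; auto.
    apply cvC_subseq with (h := fun N => (N + r)%nat); auto. intros; lia. }
  { intros N r. rewrite !Cmod_mult, Cmod_inv by (apply qpoch_neq_0; auto).
    pose proof (qfall_Cmod_le p N r Hp). pose proof (Cmod_ge_0 (al r)).
    pose proof (Cmod_ge_0 (qfall p N r)). specialize (Hal r). pose proof (HLlow (N + r)%nat).
    assert (/ Cmod (qpoch (a * p) p (N + r)) <= / L)%R by (apply Rinv_le_contravar; auto).
    assert (0 <= / Cmod (qpoch (a * p) p (N + r)))%R by (left; apply Rinv_0_lt_compat; lra).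
    unfold Rdiv. replace (Bal * / L * 2 ^ r)%R with (Bal * (2 ^ r * / L))%R by ring.
    apply Rmult_le_compat; auto. apply Rmult_le_pos; auto. apply Rmult_le_compat; auto. }
  assert (l1 = l2) as <-.
  { apply (cvC_unique _ _ _ Hlim1). apply cvC_ext with (2 := Hlim2).
    intros N. symmetry. apply bailey_finite; auto. }
  exists l1, (l1 * Lap), Lap. repeat split; auto.
  apply seriesC_ext with (fun r => Lap * (cpow a r * cpow p (r * r) * (al r * / Lap))).
  { intros r. field; auto. }
  rewrite Cmult_comm. apply seriesC_scal; auto.
Qed.

(** * Three Bailey pairs in base [q^2] *)

Definition alphaA (q : C) (r : nat) : C :=
  match r with O => 1 | S _ => cpow (-1) r * cpow q (r * r + tri r) * (1 + cpow q r) end.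
Definition alphaB (q : C) (r : nat) : C :=
  cpow (-1) r * cpow q (r * r + tri r) * (1 - cpow q (S (S (r + r + r + r)))) / (1 - q * q).
Definition alphaC (q : C) (r : nat) : C :=
  cpow (-1) r * cpow q (r * r + tri r + r) * (1 - cpow q (S (r + r))) / (1 - q).

Definition betaAB (q : C) (n : nat) : C := / (qpoch (q * q) (q * q) n * qpoch (-q) q (n + n)).
Definition betaC (q : C) (n : nat) : C := / (qpoch (q * q) (q * q) n * qpoch (-(q * q)) q (n + n)).

Definition ratioAB (q : C) (n : nat) : C :=
  / ((1 - q * q * cpow (q * q) n) * (1 + q * cpow (q * q) n) * (1 + q * q * cpow (q * q) n)).
Definition ratioC (q : C) (n : nat) : C :=
  / ((1 - q * q * cpow (q * q) n) * (1 + q * q * cpow (q * q) n) * (1 + q * q * q * cpow (q * q) n)).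

Definition certA (q : C) (n r : nat) : C :=
  cpow (-1) r * cpow q (r * r + tri r)
  / (qpoch (q * q) (q * q) (S n - r) * qpoch (q * q) (q * q) (n + r)) * ratioAB q n *
  (- cpow q (2 * (S n - r)) - cpow q (S (S (n + n)) - r) * (1 + q * cpow (q * q) n)
   - q * cpow (q * q) n).

Definition certB (q : C) (n r : nat) : C :=
  cpow (-1) r * cpow q (r * r + tri r) / (1 - q * q)
  / (qpoch (q * q) (q * q) (S n - r) * qpoch (q * q * (q * q)) (q * q) (n + r)) * ratioAB q n *
  (- cpow q (2 * (S n - r)) - cpow q (S (S (S (n + n + n + n))) - r)
   + (q * q * q * q * cpow (q * q) n * cpow (q * q) n - q * cpow (q * q) n)
   + (q * cpow (q * q) n - q * q * q * q * cpow (q * q) n * cpow (q * q) n) * cpow q r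
   + q * q * q * cpow (q * q) n * cpow (q * q) n * cpow q r * cpow q r
   + q * q * cpow (q * q) n * cpow q r * cpow q r * cpow q r).

Definition certC (q : C) (n r : nat) : C :=
  cpow (-1) r * cpow q (r * r + tri r + r) / (1 - q)
  / (qpoch (q * q) (q * q) (S n - r) * qpoch (q * q * (q * q)) (q * q) (n + r)) * ratioC q n *
  (- cpow q (2 * (S n - r)) - cpow q (S (S (S (S (n + n + n + n)))) - r)
   + q * q * q * q * cpow (q * q) n * cpow (q * q) n + q * q * cpow (q * q) n * cpow q r).

Section BaileyPairs.

Variable q : C.
Hypothesis Hq : (Cmod q < 1)%R.

Let Hq2 : (Cmod (q * q) < 1)%R := Cmod_lt_1_mult q q Hq Hq.
Let Hq4 : (Cmod (q * q * (q * q)) < 1)%R := Cmod_lt_1_mult _ _ Hq2 Hq2.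
Let Hq3 : (Cmod (q * q * q) < 1)%R := Cmod_lt_1_mult _ _ Hq2 Hq.

Lemma one_plus_q_cpow_neq_0 x k : (Cmod x < 1)%R -> 1 + x * cpow (q * q) k <> 0.
Proof. intros Hx. apply one_plus_neq_0, Cmod_mult_cpow_lt_1; auto. Qed.

Lemma betaAB_S n : betaAB q (S n) = ratioAB q n * betaAB q n.
Proof.
  unfold betaAB, ratioAB. replace (S n + S n)%nat with (S (S (n + n))) by lia. rewrite !qpoch_S.
  assert (H1 : qpoch (q * q) (q * q) n <> 0) by (apply qpoch_neq_0; auto).
  assert (H2 : qpoch (-q) q (n + n) <> 0) by (apply qpoch_neq_0; auto; rewrite Cmod_opp; auto).
  assert (H5 := one_minus_mult_cpow_neq_0 (q * q) n Hq2).
  assert (H10 := one_plus_q_cpow_neq_0 q n Hq).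
  assert (H11 := one_plus_q_cpow_neq_0 (q * q) n Hq2).
  normcpow. field; repeat split; auto.
Qed.

Lemma betaC_S n : betaC q (S n) = ratioC q n * betaC q n.
Proof.
  unfold betaC, ratioC. replace (S n + S n)%nat with (S (S (n + n))) by lia. rewrite !qpoch_S.
  assert (H1 : qpoch (q * q) (q * q) n <> 0) by (apply qpoch_neq_0; auto).
  assert (H2 : qpoch (-(q * q)) q (n + n) <> 0) by (apply qpoch_neq_0; auto; rewrite Cmod_opp; auto).
  assert (H5 := one_minus_mult_cpow_neq_0 (q * q) n Hq2).
  assert (H10 := one_plus_q_cpow_neq_0 (q * q) n Hq2).
  assert (H11 := one_plus_q_cpow_neq_0 (q * q * q) n Hq3).
  normcpow. field; repeat split; auto.
Qed.

Lemma certA_zero n :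
  alphaA q O * bailey_kernel (q * q) 1 (S n) O - ratioAB q n * (alphaA q O * bailey_kernel (q * q) 1 n O)
  = certA q n 1%nat.
Proof.
  unfold alphaA, bailey_kernel, certA, ratioAB. rewrite !Cmult_1_l, !Nat.sub_0_r, !Nat.add_0_r.
  replace (S n - 1)%nat with n by lia. replace (n + 1)%nat with (S n) by lia.
  replace (2 * n)%nat with (n + n)%nat by lia. replace (S (S (n + n)) - 1)%nat with (S (n + n)) by lia.
  simpl tri. rewrite !qpoch_S.
  assert (H1 : qpoch (q * q) (q * q) n <> 0) by (apply qpoch_neq_0; auto).
  assert (H5 := one_minus_mult_cpow_neq_0 (q * q) n Hq2).
  assert (H10 := one_plus_q_cpow_neq_0 q n Hq).
  assert (H11 := one_plus_q_cpow_neq_0 (q * q) n Hq2).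
  normcpow. repeat rewrite cpow_sq_S. normcpow. field; repeat split; auto.
Qed.

Lemma certA_step r s : let n := (S r + s)%nat in
  alphaA q (S r) * bailey_kernel (q * q) 1 (S n) (S r)
  - ratioAB q n * (alphaA q (S r) * bailey_kernel (q * q) 1 n (S r))
  = certA q n (S (S r)) - certA q n (S r).
Proof.
  intros n. unfold n, alphaA, bailey_kernel, certA, ratioAB. rewrite !Cmult_1_l.
  replace (S (S r + s) - S r)%nat with (S s) by lia.
  replace (S (S r + s) + S r)%nat with (S (S (S (r + r + s)))) by lia.
  replace (S r + s - S r)%nat with s by lia.
  replace (S r + s + S r)%nat with (S (S (r + r + s))) by lia.
  replace (S (S r + s) - S (S r))%nat with s by lia.
  replace (S r + s + S (S r))%nat with (S (S (S (r + r + s)))) by lia.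
  replace (2 * s)%nat with (s + s)%nat by lia.
  replace (2 * S s)%nat with (S (S (s + s))) by lia.
  replace (S (S (S r + s + (S r + s))) - S (S r))%nat with (S (S (r + s + s))) by lia.
  replace (S (S (S r + s + (S r + s))) - S r)%nat with (S (S (S (r + s + s)))) by lia.
  simpl tri. rewrite !qpoch_S.
  assert (H1 : qpoch (q * q) (q * q) s <> 0) by (apply qpoch_neq_0; auto).
  assert (H2 : qpoch (q * q) (q * q) (r + r + s) <> 0) by (apply qpoch_neq_0; auto).
  assert (H5 := one_minus_mult_cpow_neq_0 (q * q) s Hq2).
  assert (H6 := one_minus_mult_cpow_neq_0 (q * q) (r + r + s) Hq2).
  assert (H7 := one_minus_mult_cpow_neq_0 (q * q) (S (r + r + s)) Hq2).
  assert (H8 := one_minus_mult_cpow_neq_0 (q * q) (S (S (r + r + s))) Hq2).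
  assert (H9 := one_minus_mult_cpow_neq_0 (q * q) (S r + s) Hq2).
  assert (H10 := one_plus_q_cpow_neq_0 q (S r + s) Hq).
  assert (H11 := one_plus_q_cpow_neq_0 (q * q) (S r + s) Hq2).
  repeat rewrite cpow_sq_S. simpl tri.
  normcpow. repeat rewrite cpow_sq_S. normcpow. field; repeat split; auto.
Qed.

Lemma certA_last n :
  alphaA q (S n) * bailey_kernel (q * q) 1 (S n) (S n) = - certA q n (S n).
Proof.
  unfold alphaA, bailey_kernel, certA, ratioAB. rewrite !Cmult_1_l, !Nat.sub_diag.
  replace (S n + S n)%nat with (S (S (n + n))) by lia. replace (n + S n)%nat with (S (n + n)) by lia.
  replace (S (S (n + n)) - S n)%nat with (S n) by lia. simpl Nat.mul.
  simpl tri. rewrite !qpoch_S, qpoch_0.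
  assert (H1 : qpoch (q * q) (q * q) (n + n) <> 0) by (apply qpoch_neq_0; auto).
  assert (H5 := one_minus_mult_cpow_neq_0 (q * q) (n + n) Hq2).
  assert (H6 := one_minus_mult_cpow_neq_0 (q * q) (S (n + n)) Hq2).
  assert (H7 := one_minus_mult_cpow_neq_0 (q * q) n Hq2).
  assert (H10 := one_plus_q_cpow_neq_0 q n Hq).
  assert (H11 := one_plus_q_cpow_neq_0 (q * q) n Hq2).
  normcpow. repeat rewrite cpow_sq_S. normcpow. field; repeat split; auto.
Qed.

Lemma bailey_pair_A : bailey_pair (q * q) 1 (alphaA q) (betaAB q).
Proof.
  apply bailey_pair_by_certificate with (ratioAB q) (certA q).
  - unfold alphaA, betaAB, bailey_kernel. simpl. rewrite !qpoch_0. field.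
  - apply betaAB_S.
  - apply certA_zero.
  - apply certA_step.
  - apply certA_last.
Qed.

Lemma certB_zero n :
  alphaB q O * bailey_kernel (q * q) (q * q) (S n) O
  - ratioAB q n * (alphaB q O * bailey_kernel (q * q) (q * q) n O) = certB q n 1%nat.
Proof.
  unfold alphaB, bailey_kernel, certB, ratioAB. rewrite !Nat.sub_0_r, !Nat.add_0_r.
  replace (S n - 1)%nat with n by lia. replace (n + 1)%nat with (S n) by lia.
  replace (2 * n)%nat with (n + n)%nat by lia.
  replace (S (S (S (n + n + n + n))) - 1)%nat with (S (S (n + n + n + n))) by lia.
  simpl tri. rewrite !qpoch_S.
  assert (H1 : qpoch (q * q) (q * q) n <> 0) by (apply qpoch_neq_0; auto).
  assert (H2 : qpoch (q * q * (q * q)) (q * q) n <> 0) by (apply qpoch_neq_0; auto).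
  assert (H5 := one_minus_mult_cpow_neq_0 (q * q) n Hq2).
  assert (H6 := one_minus_sq_cpow_neq_0 (q * q) n Hq2).
  assert (H10 := one_plus_q_cpow_neq_0 q n Hq).
  assert (H11 := one_plus_q_cpow_neq_0 (q * q) n Hq2).
  assert (H12 := one_minus_neq_0 (q * q) Hq2).
  normcpow. repeat rewrite cpow_sq_S. normcpow. field; repeat split; auto.
Qed.

Lemma certB_step r s : let n := (S r + s)%nat in
  alphaB q (S r) * bailey_kernel (q * q) (q * q) (S n) (S r)
  - ratioAB q n * (alphaB q (S r) * bailey_kernel (q * q) (q * q) n (S r))
  = certB q n (S (S r)) - certB q n (S r).
Proof.
  intros n. unfold n, alphaB, bailey_kernel, certB, ratioAB.
  replace (S (S r + s) - S r)%nat with (S s) by lia.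
  replace (S (S r + s) + S r)%nat with (S (S (S (r + r + s)))) by lia.
  replace (S r + s - S r)%nat with s by lia.
  replace (S r + s + S r)%nat with (S (S (r + r + s))) by lia.
  replace (S (S r + s) - S (S r))%nat with s by lia.
  replace (S r + s + S (S r))%nat with (S (S (S (r + r + s)))) by lia.
  replace (2 * s)%nat with (s + s)%nat by lia.
  replace (2 * S s)%nat with (S (S (s + s))) by lia.
  replace (S (S (S (S r + s + (S r + s) + (S r + s) + (S r + s)))) - S (S r))%nat
    with (S (S (S (S (S (r + r + r + s + s + s + s)))))) by lia.
  replace (S (S (S (S r + s + (S r + s) + (S r + s) + (S r + s)))) - S r)%nat
    with (S (S (S (S (S (S (r + r + r + s + s + s + s))))))) by lia.
  simpl tri. rewrite !qpoch_S.
  assert (H1 : qpoch (q * q) (q * q) s <> 0) by (apply qpoch_neq_0; auto).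
  assert (H2 : qpoch (q * q * (q * q)) (q * q) (r + r + s) <> 0) by (apply qpoch_neq_0; auto).
  assert (H5 := one_minus_mult_cpow_neq_0 (q * q) s Hq2).
  assert (H6 := one_minus_sq_cpow_neq_0 (q * q) (r + r + s) Hq2).
  assert (H7 := one_minus_sq_cpow_neq_0 (q * q) (S (r + r + s)) Hq2).
  assert (H8 := one_minus_sq_cpow_neq_0 (q * q) (S (S (r + r + s))) Hq2).
  assert (H9 := one_minus_mult_cpow_neq_0 (q * q) (S r + s) Hq2).
  assert (H10 := one_plus_q_cpow_neq_0 q (S r + s) Hq).
  assert (H11 := one_plus_q_cpow_neq_0 (q * q) (S r + s) Hq2).
  assert (H12 := one_minus_neq_0 (q * q) Hq2).
  normcpow. repeat rewrite cpow_sq_S. normcpow. field; repeat split; auto.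
Qed.

Lemma certB_last n :
  alphaB q (S n) * bailey_kernel (q * q) (q * q) (S n) (S n) = - certB q n (S n).
Proof.
  unfold alphaB, bailey_kernel, certB, ratioAB. rewrite !Nat.sub_diag.
  replace (S n + S n)%nat with (S (S (n + n))) by lia. replace (n + S n)%nat with (S (n + n)) by lia.
  replace (S (S (S (n + n + n + n))) - S n)%nat with (S (S (n + n + n))) by lia.
  simpl tri. rewrite !qpoch_S, qpoch_0.
  assert (H1 : qpoch (q * q * (q * q)) (q * q) (n + n) <> 0) by (apply qpoch_neq_0; auto).
  assert (H5 := one_minus_sq_cpow_neq_0 (q * q) (n + n) Hq2).
  assert (H6 := one_minus_sq_cpow_neq_0 (q * q) (S (n + n)) Hq2).
  assert (H7 := one_minus_mult_cpow_neq_0 (q * q) n Hq2).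
  assert (H10 := one_plus_q_cpow_neq_0 q n Hq).
  assert (H11 := one_plus_q_cpow_neq_0 (q * q) n Hq2).
  assert (H12 := one_minus_neq_0 (q * q) Hq2).
  normcpow. repeat rewrite cpow_sq_S. normcpow. field; repeat split; auto.
Qed.

Lemma bailey_pair_B : bailey_pair (q * q) (q * q) (alphaB q) (betaAB q).
Proof.
  apply bailey_pair_by_certificate with (ratioAB q) (certB q).
  - unfold alphaB, betaAB, bailey_kernel. simpl. rewrite !qpoch_0. field.
    apply one_minus_neq_0; auto.
  - apply betaAB_S.
  - apply certB_zero.
  - apply certB_step.
  - apply certB_last.
Qed.

Lemma certC_zero n :
  alphaC q O * bailey_kernel (q * q) (q * q) (S n) O
  - ratioC q n * (alphaC q O * bailey_kernel (q * q) (q * q) n O) = certC q n 1%nat.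
Proof.
  unfold alphaC, bailey_kernel, certC, ratioC. rewrite !Nat.sub_0_r, !Nat.add_0_r.
  replace (S n - 1)%nat with n by lia. replace (n + 1)%nat with (S n) by lia.
  replace (2 * n)%nat with (n + n)%nat by lia.
  replace (S (S (S (S (n + n + n + n)))) - 1)%nat with (S (S (S (n + n + n + n)))) by lia.
  simpl tri. rewrite !qpoch_S.
  assert (H1 : qpoch (q * q) (q * q) n <> 0) by (apply qpoch_neq_0; auto).
  assert (H2 : qpoch (q * q * (q * q)) (q * q) n <> 0) by (apply qpoch_neq_0; auto).
  assert (H5 := one_minus_mult_cpow_neq_0 (q * q) n Hq2).
  assert (H6 := one_minus_sq_cpow_neq_0 (q * q) n Hq2).
  assert (H10 := one_plus_q_cpow_neq_0 (q * q) n Hq2).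
  assert (H11 := one_plus_q_cpow_neq_0 (q * q * q) n Hq3).
  assert (H12 := one_minus_neq_0 q Hq).
  normcpow. repeat rewrite cpow_sq_S. normcpow. field; repeat split; auto.
Qed.

Lemma certC_step r s : let n := (S r + s)%nat in
  alphaC q (S r) * bailey_kernel (q * q) (q * q) (S n) (S r)
  - ratioC q n * (alphaC q (S r) * bailey_kernel (q * q) (q * q) n (S r))
  = certC q n (S (S r)) - certC q n (S r).
Proof.
  intros n. unfold n, alphaC, bailey_kernel, certC, ratioC.
  replace (S (S r + s) - S r)%nat with (S s) by lia.
  replace (S (S r + s) + S r)%nat with (S (S (S (r + r + s)))) by lia.
  replace (S r + s - S r)%nat with s by lia.
  replace (S r + s + S r)%nat with (S (S (r + r + s))) by lia.
  replace (S (S r + s) - S (S r))%nat with s by lia.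
  replace (S r + s + S (S r))%nat with (S (S (S (r + r + s)))) by lia.
  replace (2 * s)%nat with (s + s)%nat by lia.
  replace (2 * S s)%nat with (S (S (s + s))) by lia.
  replace (S (S (S (S (S r + s + (S r + s) + (S r + s) + (S r + s))))) - S (S r))%nat
    with (S (S (S (S (S (S (r + r + r + s + s + s + s))))))) by lia.
  replace (S (S (S (S (S r + s + (S r + s) + (S r + s) + (S r + s))))) - S r)%nat
    with (S (S (S (S (S (S (S (r + r + r + s + s + s + s)))))))) by lia.
  simpl tri. rewrite !qpoch_S.
  assert (H1 : qpoch (q * q) (q * q) s <> 0) by (apply qpoch_neq_0; auto).
  assert (H2 : qpoch (q * q * (q * q)) (q * q) (r + r + s) <> 0) by (apply qpoch_neq_0; auto).
  assert (H5 := one_minus_mult_cpow_neq_0 (q * q) s Hq2).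
  assert (H6 := one_minus_sq_cpow_neq_0 (q * q) (r + r + s) Hq2).
  assert (H7 := one_minus_sq_cpow_neq_0 (q * q) (S (r + r + s)) Hq2).
  assert (H8 := one_minus_sq_cpow_neq_0 (q * q) (S (S (r + r + s))) Hq2).
  assert (H9 := one_minus_mult_cpow_neq_0 (q * q) (S r + s) Hq2).
  assert (H10 := one_plus_q_cpow_neq_0 (q * q) (S r + s) Hq2).
  assert (H11 := one_plus_q_cpow_neq_0 (q * q * q) (S r + s) Hq3).
  assert (H12 := one_minus_neq_0 q Hq).
  normcpow. repeat rewrite cpow_sq_S. normcpow. field; repeat split; auto.
Qed.

Lemma certC_last n :
  alphaC q (S n) * bailey_kernel (q * q) (q * q) (S n) (S n) = - certC q n (S n).
Proof.
  unfold alphaC, bailey_kernel, certC, ratioC. rewrite !Nat.sub_diag.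
  replace (S n + S n)%nat with (S (S (n + n))) by lia. replace (n + S n)%nat with (S (n + n)) by lia.
  replace (S (S (S (S (n + n + n + n)))) - S n)%nat with (S (S (S (n + n + n)))) by lia.
  simpl tri. rewrite !qpoch_S, qpoch_0.
  assert (H1 : qpoch (q * q * (q * q)) (q * q) (n + n) <> 0) by (apply qpoch_neq_0; auto).
  assert (H5 := one_minus_sq_cpow_neq_0 (q * q) (n + n) Hq2).
  assert (H6 := one_minus_sq_cpow_neq_0 (q * q) (S (n + n)) Hq2).
  assert (H7 := one_minus_mult_cpow_neq_0 (q * q) n Hq2).
  assert (H10 := one_plus_q_cpow_neq_0 (q * q) n Hq2).
  assert (H11 := one_plus_q_cpow_neq_0 (q * q * q) n Hq3).
  assert (H12 := one_minus_neq_0 q Hq).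
  normcpow. repeat rewrite cpow_sq_S. normcpow. field; repeat split; auto.
Qed.

Lemma bailey_pair_C : bailey_pair (q * q) (q * q) (alphaC q) (betaC q).
Proof.
  apply bailey_pair_by_certificate with (ratioC q) (certC q).
  - unfold alphaC, betaC, bailey_kernel. simpl. rewrite !qpoch_0. field.
    apply one_minus_neq_0; auto.
  - apply betaC_S.
  - apply certC_zero.
  - apply certC_step.
  - apply certC_last.
Qed.

End BaileyPairs.

(** * The Rogers-Selberg identities *)

Lemma Cmod_inv_qpoch_prod_bounded a b p p' :
  (Cmod a < 1)%R -> (Cmod b < 1)%R -> (Cmod p < 1)%R -> (Cmod p' < 1)%R ->
  exists B, forall m n, (Cmod (/ (qpoch a p m * qpoch b p' n)) <= B)%R.
Proof.
  intros Ha Hb Hp Hp'.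
  destruct (qpoch_cv a p Ha Hp) as [L1 [_ [HL1 [_ [H1 _]]]]].
  destruct (qpoch_cv b p' Hb Hp') as [L2 [_ [HL2 [_ [H2 _]]]]].
  exists (/ (L1 * L2))%R. intros m n.
  rewrite Cmod_inv by (apply Cmult_neq_0; apply qpoch_neq_0; auto).
  rewrite Cmod_mult. apply Rinv_le_contravar. apply Rmult_lt_0_compat; auto.
  apply Rmult_le_compat; try lra; auto.
Qed.

Lemma Cmod_alphaA_le q r : (Cmod q < 1)%R -> (Cmod (alphaA q r) <= 2)%R.
Proof.
  intros Hq. destruct r. simpl. rewrite Cmod_1. lra.
  unfold alphaA. rewrite !Cmod_mult, Cmod_cpow_m1.
  pose proof (Cmod_cpow_le_1 q (S r * S r + tri (S r)) (Rlt_le _ _ Hq)).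
  pose proof (Cmod_ge_0 (cpow q (S r * S r + tri (S r)))).
  assert (Cmod (1 + cpow q (S r)) <= 2)%R.
  { eapply Rle_trans. apply Cmod_triangle. rewrite Cmod_1.
    pose proof (Cmod_cpow_le_1 q (S r) (Rlt_le _ _ Hq)). lra. }
  pose proof (Cmod_ge_0 (1 + cpow q (S r))). nra.
Qed.

Lemma Cmod_signed_cpow_diff_le q (d : C) r e1 e2 : (Cmod q < 1)%R -> d <> 0 ->
  (Cmod (cpow (-1) r * cpow q e1 * (1 - cpow q e2) / d) <= 2 / Cmod d)%R.
Proof.
  intros Hq Hd. rewrite Cmod_div by auto. rewrite !Cmod_mult, Cmod_cpow_m1.
  pose proof (Cmod_cpow_le_1 q e1 (Rlt_le _ _ Hq)). pose proof (Cmod_ge_0 (cpow q e1)).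
  assert (Cmod (1 - cpow q e2) <= 2)%R.
  { unfold Cminus. eapply Rle_trans. apply Cmod_triangle. rewrite Cmod_1, Cmod_opp.
    pose proof (Cmod_cpow_le_1 q e2 (Rlt_le _ _ Hq)). lra. }
  pose proof (Cmod_ge_0 (1 - cpow q e2)). assert (0 < Cmod d)%R by (apply Cmod_gt_0; auto).
  unfold Rdiv. apply Rmult_le_compat_r. left; apply Rinv_0_lt_compat; auto. nra.
Qed.

Lemma qpoch_cv_shift a p L L' :
  cvC (qpoch a p) L -> cvC (qpoch (a * p) p) L' -> L = (1 - a) * L'.
Proof.
  intros H1 H2. apply (cvC_unique (fun n => qpoch a p (S n))).
  - apply cvC_subseq; auto.
  - apply cvC_ext with (fun n => (1 - a) * qpoch (a * p) p n).
    intros. symmetry. apply qpoch_shift. apply cvC_scal; auto.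
Qed.

Section RogersSelberg.

Variable q : C.
Hypothesis Hq : (Cmod q < 1)%R.

Let Hq2 : (Cmod (q * q) < 1)%R := Cmod_lt_1_mult q q Hq Hq.

Lemma betaAB_bounded : exists B, forall n, (Cmod (betaAB q n) <= B)%R.
Proof.
  destruct (Cmod_inv_qpoch_prod_bounded (q * q) (-q) (q * q) q) as [B HB]; auto.
  rewrite Cmod_opp; auto. exists B. intros n. apply HB.
Qed.

Lemma betaC_bounded : exists B, forall n, (Cmod (betaC q n) <= B)%R.
Proof.
  destruct (Cmod_inv_qpoch_prod_bounded (q * q) (-(q * q)) (q * q) q) as [B HB]; auto.
  rewrite Cmod_opp; auto. exists B. intros n. apply HB.
Qed.

Lemma rogers_selberg_1 :
  exists SL Lpp Lz Lw LP, seriesC (fun n => cpow (q * q) (n * n) * betaAB q n) SL /\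
    cvC (qpoch (q * q) (q * q)) Lpp /\ cvC (qpoch (cpow q 3) (cpow q 7)) Lz /\
    cvC (qpoch (cpow q 4) (cpow q 7)) Lw /\ cvC (qpoch (cpow q 7) (cpow q 7)) LP /\
    SL * Lpp = Lz * Lw * LP.
Proof.
  destruct betaAB_bounded as [Bb HBb].
  destruct (bailey_lemma (q * q) 1 (alphaA q) (betaAB q) 2 Bb) as [SL [SR [Lpp [HSL [HSR [HLpp HE]]]]]];
    rewrite ?Cmult_1_l; auto.
  { rewrite Cmod_1. lra. }
  { apply bailey_pair_A; auto. }
  { intros; apply Cmod_alphaA_le; auto. }
  destruct (jacobi_triple_product (cpow q 3) (cpow q 4)
              (Cmod_cpow_S_lt_1 q 2 Hq) (Cmod_cpow_S_lt_1 q 3 Hq))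
    as [Lz [Lw [LP [SJ [Hz [Hw [HP [HSJ HSJe]]]]]]]].
  replace (cpow q 3 * cpow q 4) with (cpow q 7) in * by (rewrite <- cpow_add; auto).
  rewrite Cmult_1_l in HLpp.
  exists SL, Lpp, Lz, Lw, LP. repeat split; auto.
  - apply seriesC_ext with (fun n => cpow 1 n * cpow (q * q) (n * n) * betaAB q n); auto.
    intros. rewrite cpow_one. ring.
  - rewrite HE, <- HSJe.
    apply (seriesC_unique (fun r => cpow 1 r * cpow (q * q) (r * r) * alphaA q r)); auto.
    apply seriesC_ext with (jtp_alpha (cpow q 3) (cpow q 4)); auto.
    intros [|r]. simpl. ring.
    unfold jtp_alpha, alphaA. normcpow. rewrite !cpow_sq in *. simpl tri in *. normcpow.
    rewrite ?cpow_one in *. ring.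
Qed.

(* Relative to [a = q^2], the two halves of the theta series are offset by one index. *)
Lemma rogers_selberg_a_q2 (al be : nat -> C) (d : C) (cz cw : nat) Bal Bbe :
  d <> 0 -> (0 < cz)%nat -> (0 < cw)%nat -> (cz + cw = 7)%nat ->
  bailey_pair (q * q) (q * q) al be ->
  (forall n, Cmod (be n) <= Bbe)%R -> (forall r, Cmod (al r) <= Bal)%R ->
  (forall r, cpow (q * q) r * cpow (q * q) (r * r) * al r
             = / d * (theta_half (cpow q cw) (cpow q cz) r + theta_half (cpow q cz) (cpow q cw) (S r))) ->
  exists SL Lpp Lz Lw LP, seriesC (fun n => cpow (q * q) n * cpow (q * q) (n * n) * be n) SL /\
    cvC (qpoch (q * q) (q * q)) Lpp /\ cvC (qpoch (cpow q cz) (cpow q 7)) Lz /\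
    cvC (qpoch (cpow q cw) (cpow q 7)) Lw /\ cvC (qpoch (cpow q 7) (cpow q 7)) LP /\
    d * (SL * Lpp) = (1 - q * q) * (Lz * Lw * LP).
Proof.
  intros Hd Hcz Hcw H7 Hpair Hbe Hal Hterm.
  assert (Hz : (Cmod (cpow q cz) < 1)%R) by (destruct cz; [lia | apply Cmod_cpow_S_lt_1; auto]).
  assert (Hw : (Cmod (cpow q cw) < 1)%R) by (destruct cw; [lia | apply Cmod_cpow_S_lt_1; auto]).
  destruct (bailey_lemma (q * q) (q * q) al be Bal Bbe) as [SL [SR [Lap [HSL [HSR [HLap HE]]]]]];
    auto using Cmod_lt_1_mult.
  { lra. }
  destruct (jacobi_triple_product _ _ Hz Hw) as [Lz [Lw [LP [SJ [HLz [HLw [HLP [HSJ HSJe]]]]]]]].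
  destruct (jtp_alpha_series_split _ _ SJ Hz Hw HSJ) as [U [V [HU [HV HUV]]]].
  rewrite <- cpow_add, H7 in *.
  assert (E : SR = / d * (V + (U - 1))).
  { apply (seriesC_unique (fun r => cpow (q * q) r * cpow (q * q) (r * r) * al r)); auto.
    apply seriesC_ext with (1 := fun r => eq_sym (Hterm r)).
    apply seriesC_scal. replace (U - 1) with (U - theta_half (cpow q cz) (cpow q cw) O)
      by (unfold theta_half; simpl; ring).
    apply seriesC_plus; auto. apply seriesC_shift; auto. }
  destruct (qpoch_cv (q * q) (q * q) Hq2 Hq2) as [_ [Lpp [_ [HLpp _]]]].
  exists SL, Lpp, Lz, Lw, LP. repeat split; auto.
  rewrite (qpoch_cv_shift _ _ _ _ HLpp HLap), <- HSJe, HUV.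
  replace (SL * ((1 - q * q) * Lap)) with ((1 - q * q) * (SL * Lap)) by ring.
  rewrite HE, E. field. auto.
Qed.

Lemma rogers_selberg_2 :
  exists SL Lpp Lz Lw LP, seriesC (fun n => cpow (q * q) n * cpow (q * q) (n * n) * betaAB q n) SL /\
    cvC (qpoch (q * q) (q * q)) Lpp /\ cvC (qpoch (cpow q 2) (cpow q 7)) Lz /\
    cvC (qpoch (cpow q 5) (cpow q 7)) Lw /\ cvC (qpoch (cpow q 7) (cpow q 7)) LP /\
    SL * Lpp = Lz * Lw * LP.
Proof.
  assert (Hd : 1 - q * q <> 0) by (apply one_minus_neq_0; auto).
  destruct betaAB_bounded as [Bb HBb].
  destruct (rogers_selberg_a_q2 (alphaB q) (betaAB q) (1 - q * q) 2 5 (2 / Cmod (1 - q * q)) Bb)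
    as [SL [Lpp [Lz [Lw [LP [HSL [HLpp [Hz [Hw [HP HE]]]]]]]]]]; auto; try lia.
  - apply bailey_pair_B; auto.
  - intros; apply Cmod_signed_cpow_diff_le; auto.
  - intros r. unfold theta_half, alphaB. normcpow. rewrite !cpow_sq in *. simpl tri in *. normcpow.
    rewrite ?cpow_one in *. field. auto.
  - exists SL, Lpp, Lz, Lw, LP. repeat split; auto.
    apply (f_equal (fun x => x / (1 - q * q))) in HE.
    replace ((1 - q * q) * (SL * Lpp) / (1 - q * q)) with (SL * Lpp) in HE by (field; auto).
    rewrite HE. field. auto.
Qed.

Lemma rogers_selberg_3 :
  exists SL Lpp Lz Lw LP, seriesC (fun n => cpow (q * q) n * cpow (q * q) (n * n) * betaC q n) SL /\
    cvC (qpoch (q * q) (q * q)) Lpp /\ cvC (qpoch (cpow q 1) (cpow q 7)) Lz /\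
    cvC (qpoch (cpow q 6) (cpow q 7)) Lw /\ cvC (qpoch (cpow q 7) (cpow q 7)) LP /\
    SL * Lpp = (1 + q) * (Lz * Lw * LP).
Proof.
  assert (Hd : 1 - q <> 0) by (apply one_minus_neq_0; auto).
  destruct betaC_bounded as [Bb HBb].
  destruct (rogers_selberg_a_q2 (alphaC q) (betaC q) (1 - q) 1 6 (2 / Cmod (1 - q)) Bb)
    as [SL [Lpp [Lz [Lw [LP [HSL [HLpp [Hz [Hw [HP HE]]]]]]]]]]; auto; try lia.
  - apply bailey_pair_C; auto.
  - intros; apply Cmod_signed_cpow_diff_le; auto.
  - intros r. unfold theta_half, alphaC. normcpow. rewrite !cpow_sq in *. simpl tri in *. normcpow.
    rewrite ?cpow_one in *. field. auto.
  - exists SL, Lpp, Lz, Lw, LP. repeat split; auto.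
    apply (f_equal (fun x => x / (1 - q))) in HE.
    replace ((1 - q) * (SL * Lpp) / (1 - q)) with (SL * Lpp) in HE by (field; auto).
    rewrite HE. field. auto.
Qed.

End RogersSelberg.

Lemma euler_series q b e c E : (Cmod q < 1)%R -> (0 < b)%nat ->
  cvC (qpoch (- cpow q b) (q * q)) E ->
  seriesC (fun k => cpow q (e + (2 * tri k + b * k)) * c / qpoch (q * q) (q * q) k) (cpow q e * c * E).
Proof.
  intros Hq Hb HE. assert (Hq2 := Cmod_lt_1_mult q q Hq Hq).
  assert (Hqb : (Cmod (cpow q b) < 1)%R).
  { destruct b. lia. apply Cmod_cpow_S_lt_1; auto. }
  destruct (euler_identity (q * q) (cpow q b) Hq2 Hqb) as [E' [HE' HS]].
  assert (E = E') as <- by (apply (cvC_unique _ _ _ HE HE')).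
  apply seriesC_ext
    with (fun k => cpow q e * c * (cpow (q * q) (tri k) * cpow (cpow q b) k / qpoch (q * q) (q * q) k)).
  - intros k. rewrite !cpow_add, !cpow_mul. replace (cpow q 2) with (q * q) by (simpl; ring).
    field. apply qpoch_neq_0; auto.
  - apply seriesC_scal; auto.
Qed.

Lemma qpoch_neg_q_split q m E1 E2 W : (Cmod q < 1)%R ->
  cvC (qpoch (- cpow q (S m)) (q * q)) E1 -> cvC (qpoch (- cpow q (S (S m))) (q * q)) E2 ->
  cvC (qpoch (-q) q) W -> qpoch (-q) q m * (E1 * E2) = W.
Proof.
  intros Hq H1 H2 HW. apply (cvC_unique (fun n => qpoch (-q) q m * (qpoch (- cpow q (S m)) (q * q) n
                                                     * qpoch (- cpow q (S (S m))) (q * q) n))).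
  - apply cvC_scal, cvC_mult; auto.
  - apply cvC_ext with (fun n => qpoch (-q) q (m + (n + n))).
    + intros n. replace (- cpow q (S (S m))) with (- cpow q (S m) * q) by (simpl; ring).
      rewrite qpoch_square_base, qpoch_add.
      replace (- q * cpow q m) with (- cpow q (S m)) by (simpl; ring).
      reflexivity.
    + apply cvC_subseq with (h := fun n => (m + (n + n))%nat); auto. intros; lia.
Qed.

Lemma is_series3_intro (t : nat -> nat -> nat -> C) (f : nat -> C) l :
  (forall i, exists g, (forall j, seriesC (t i j) (g j)) /\ seriesC g (f i)) -> seriesC f l ->
  is_series3 t l.
Proof.
  intros H HS. exists f. split.
  - intros i. destruct (H i) as [g [Hg1 Hg2]]. exists g. split.
    + intros j. apply seriesC_is_series. auto.
    + apply seriesC_is_series; auto.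
  - apply seriesC_is_series; auto.
Qed.

Lemma double_euler_series q e bj bk c Ej Ek : (Cmod q < 1)%R -> (0 < bj)%nat -> (0 < bk)%nat ->
  cvC (qpoch (- cpow q bj) (q * q)) Ej -> cvC (qpoch (- cpow q bk) (q * q)) Ek ->
  exists g, (forall j, seriesC (fun k => cpow q (e + (2 * tri j + bj * j) + (2 * tri k + bk * k)) * c
                                        / (qpoch (q * q) (q * q) j * qpoch (q * q) (q * q) k)) (g j)) /\
            seriesC g (cpow q e * c * Ej * Ek).
Proof.
  intros Hq Hbj Hbk Hj Hk. assert (Hq2 := Cmod_lt_1_mult q q Hq Hq).
  exists (fun j => cpow q (e + (2 * tri j + bj * j)) * (c * Ek) / qpoch (q * q) (q * q) j). split.
  - intros j. replace (cpow q (e + (2 * tri j + bj * j)) * (c * Ek) / qpoch (q * q) (q * q) j)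
      with (cpow q (e + (2 * tri j + bj * j)) * (c / qpoch (q * q) (q * q) j) * Ek)
      by (field; apply qpoch_neq_0; auto).
    apply seriesC_ext with (2 := euler_series q _ _ _ _ Hq Hbk Hk).
    intros k. field. split; apply qpoch_neq_0; auto.
  - replace (cpow q e * c * Ej * Ek) with (cpow q e * (c * Ek) * Ej) by ring.
    apply euler_series; auto.
Qed.

(* The summand of each identity has the shape
   [q^(e i) q^(j^2 + bj j - j) q^(k^2 + bk k - k) / ((q^2;q^2)_i (q^2;q^2)_j (q^2;q^2)_k)]
   with [{bj, bk} = {m + 1, m + 2}], so the sums over [k] and [j] are Euler products
   whose product is [(-q;q)_oo / (-q;q)_m]. *)
Lemma is_series3_by_double_euler q (t : nat -> nat -> nat -> C) (e bj bk m : nat -> nat) W l :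
  (Cmod q < 1)%R -> cvC (qpoch (-q) q) W ->
  (forall i, (bj i = S (m i) /\ bk i = S (S (m i))) \/ (bj i = S (S (m i)) /\ bk i = S (m i))) ->
  (forall i j k, t i j k = cpow q (e i + (2 * tri j + bj i * j) + (2 * tri k + bk i * k))
                   / (qpoch (q * q) (q * q) i * qpoch (q * q) (q * q) j * qpoch (q * q) (q * q) k)) ->
  seriesC (fun i => W * (cpow q (e i) / (qpoch (q * q) (q * q) i * qpoch (-q) q (m i)))) l ->
  is_series3 t l.
Proof.
  intros Hq HW Hb Ht HS. assert (Hq2 := Cmod_lt_1_mult q q Hq Hq).
  apply is_series3_intro with (2 := HS). intros i.
  set (Q2 := qpoch (q * q) (q * q)).
  assert (HQ2 : forall n, Q2 n <> 0) by (intros; apply qpoch_neq_0; auto).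
  assert (Hcv : forall b, exists E, cvC (qpoch (- cpow q (S b)) (q * q)) E).
  { intros b. destruct (qpoch_cv (- cpow q (S b)) (q * q)) as [_ [E [_ [HE _]]]]; eauto.
    rewrite Cmod_opp. apply Cmod_cpow_S_lt_1; auto. }
  destruct (Hcv (m i)) as [E1 HE1]. destruct (Hcv (S (m i))) as [E2 HE2].
  assert (HW' : W * (cpow q (e i) / (Q2 i * qpoch (-q) q (m i))) = cpow q (e i) * / Q2 i * (E1 * E2)).
  { assert (qpoch (-q) q (m i) <> 0) by (apply qpoch_neq_0; rewrite ?Cmod_opp; auto).
    rewrite <- (qpoch_neg_q_split q (m i) E1 E2 W Hq HE1 HE2 HW). field. auto. }
  rewrite HW'.
  assert (Hsum : forall Ej Ek, cvC (qpoch (- cpow q (bj i)) (q * q)) Ej ->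
                   cvC (qpoch (- cpow q (bk i)) (q * q)) Ek ->
                   exists g, (forall j, seriesC (t i j) (g j)) /\ seriesC g (cpow q (e i) * / Q2 i * (Ej * Ek))).
  { intros Ej Ek Hj Hk.
    destruct (double_euler_series q (e i) (bj i) (bk i) (/ Q2 i) Ej Ek) as [g [Hg1 Hg2]];
      auto; try (destruct (Hb i); lia).
    exists g. split.
    - intros j. apply seriesC_ext with (2 := Hg1 j). intros k. rewrite Ht. fold Q2.
      field. auto.
    - rewrite Cmult_assoc. auto. }
  destruct (Hb i) as [[Hj Hk] | [Hj Hk]]; rewrite Hj, Hk in Hsum.
  - apply Hsum; auto.
  - rewrite (Cmult_comm E1 E2). apply Hsum; auto.
Qed.

Lemma qpoch_q2_cv_factor q : (Cmod q < 1)%R ->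
  exists W Lq, cvC (qpoch (-q) q) W /\ cvC (qpoch q q) Lq /\ Lq <> 0 /\
    cvC (qpoch (q * q) (q * q)) (Lq * W).
Proof.
  intros Hq. destruct (qpoch_cv (-q) q) as [_ [W [_ [HW _]]]]; auto. rewrite Cmod_opp; auto.
  destruct (qpoch_cv_neq_0 q q Hq Hq) as [Lq [HLq HLq0]].
  exists W, Lq. repeat split; auto.
  apply cvC_ext with (fun n => qpoch q q n * qpoch (-q) q n).
  intros. apply qpoch_q_mq. apply cvC_mult; auto.
Qed.

Lemma qpoch_q2_cpow q n : qpoch (pow_n q 2) (pow_n q 2) n = qpoch (q * q) (q * q) n.
Proof. rewrite pow_n_cpow. replace (cpow q 2) with (q * q) by (simpl; ring). reflexivity. Qed.

Lemma identity_1 q : (Cmod q < 1)%R ->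
  exists S P1 P2 P3 Pq,
     is_series3 (fun i j k =>
       pow_n q (2*i*i + j*j + k*k + 2*i*j + 2*i*k + k) /
       (qpoch (pow_n q 2) (pow_n q 2) i * qpoch (pow_n q 2) (pow_n q 2) j
        * qpoch (pow_n q 2) (pow_n q 2) k)) S /\
     is_qpoch_inf (pow_n q 3) (pow_n q 7) P1 /\ is_qpoch_inf (pow_n q 4) (pow_n q 7) P2 /\
     is_qpoch_inf (pow_n q 7) (pow_n q 7) P3 /\ is_qpoch_inf q q Pq /\
     S = P1 * P2 * P3 / Pq.
Proof.
  intros Hq. destruct (qpoch_q2_cv_factor q Hq) as [W [Lq [HW [HLq [HLq0 HLpp']]]]].
  destruct (rogers_selberg_1 q Hq) as [SL [Lpp [Lz [Lw [LP [HSL [HLpp [Hz [Hw [HP HE]]]]]]]]]].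
  assert (Lpp = Lq * W) as -> by (apply (cvC_unique _ _ _ HLpp HLpp')).
  exists (W * SL), Lz, Lw, LP, Lq. rewrite !pow_n_cpow. repeat split; try apply is_qpoch_inf_cvC; auto.
  - apply (is_series3_by_double_euler q _ (fun i => i * i + i * i) (fun i => S (i + i))
             (fun i => S (S (i + i))) (fun i => i + i))%nat with W; auto.
    + intros i j k. rewrite !qpoch_q2_cpow, !pow_n_cpow. do 2 f_equal.
      pose proof (tri_spec j); pose proof (tri_spec k); nia.
    + apply seriesC_ext with (2 := seriesC_scal W _ _ HSL). intros i. unfold betaAB.
      rewrite cpow_add, cpow_mult. field.
      split; apply qpoch_neq_0; rewrite ?Cmod_opp; auto using Cmod_lt_1_mult.
  - rewrite <- HE. field. auto.
Qed.

Lemma identity_2 q : (Cmod q < 1)%R ->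
  exists S P1 P2 P3 Pq,
     is_series3 (fun i j k =>
       pow_n q (2*i*i + j*j + k*k + 2*i*j + 2*i*k + 2*i + j) /
       (qpoch (pow_n q 2) (pow_n q 2) i * qpoch (pow_n q 2) (pow_n q 2) j
        * qpoch (pow_n q 2) (pow_n q 2) k)) S /\
     is_qpoch_inf (pow_n q 2) (pow_n q 7) P1 /\ is_qpoch_inf (pow_n q 5) (pow_n q 7) P2 /\
     is_qpoch_inf (pow_n q 7) (pow_n q 7) P3 /\ is_qpoch_inf q q Pq /\
     S = P1 * P2 * P3 / Pq.
Proof.
  intros Hq. destruct (qpoch_q2_cv_factor q Hq) as [W [Lq [HW [HLq [HLq0 HLpp']]]]].
  destruct (rogers_selberg_2 q Hq) as [SL [Lpp [Lz [Lw [LP [HSL [HLpp [Hz [Hw [HP HE]]]]]]]]]].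
  assert (Lpp = Lq * W) as -> by (apply (cvC_unique _ _ _ HLpp HLpp')).
  exists (W * SL), Lz, Lw, LP, Lq. rewrite !pow_n_cpow. repeat split; try apply is_qpoch_inf_cvC; auto.
  - apply (is_series3_by_double_euler q _ (fun i => i * i + i * i + i + i) (fun i => S (S (i + i)))
             (fun i => S (i + i)) (fun i => i + i))%nat with W; auto.
    + intros i j k. rewrite !qpoch_q2_cpow, !pow_n_cpow. do 2 f_equal.
      pose proof (tri_spec j); pose proof (tri_spec k); nia.
    + apply seriesC_ext with (2 := seriesC_scal W _ _ HSL). intros i. unfold betaAB.
      rewrite !cpow_add, !cpow_mult. field.
      split; apply qpoch_neq_0; rewrite ?Cmod_opp; auto using Cmod_lt_1_mult.
  - rewrite <- HE. field. auto.
Qed.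

Lemma identity_3 q : (Cmod q < 1)%R ->
  exists S P1 P2 P3 Pq,
     is_series3 (fun i j k =>
       pow_n q (2*i*i + j*j + k*k + 2*i*j + 2*i*k + 2*i + j + 2*k) /
       (qpoch (pow_n q 2) (pow_n q 2) i * qpoch (pow_n q 2) (pow_n q 2) j
        * qpoch (pow_n q 2) (pow_n q 2) k)) S /\
     is_qpoch_inf (pow_n q 1) (pow_n q 7) P1 /\ is_qpoch_inf (pow_n q 6) (pow_n q 7) P2 /\
     is_qpoch_inf (pow_n q 7) (pow_n q 7) P3 /\ is_qpoch_inf q q Pq /\
     S = P1 * P2 * P3 / Pq.
Proof.
  intros Hq. assert (H1q : 1 + q <> 0) by (apply one_plus_neq_0; auto).
  destruct (qpoch_q2_cv_factor q Hq) as [W [Lq [HW [HLq [HLq0 HLpp']]]]].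
  destruct (rogers_selberg_3 q Hq) as [SL [Lpp [Lz [Lw [LP [HSL [HLpp [Hz [Hw [HP HE]]]]]]]]]].
  assert (Lpp = Lq * W) as -> by (apply (cvC_unique _ _ _ HLpp HLpp')).
  exists (W / (1 + q) * SL), Lz, Lw, LP, Lq. rewrite !pow_n_cpow.
  repeat split; try apply is_qpoch_inf_cvC; auto.
  - apply (is_series3_by_double_euler q _ (fun i => i * i + i * i + i + i) (fun i => S (S (i + i)))
             (fun i => S (S (S (i + i)))) (fun i => S (i + i)))%nat with W; auto.
    + intros i j k. rewrite !qpoch_q2_cpow, !pow_n_cpow. do 2 f_equal.
      pose proof (tri_spec j); pose proof (tri_spec k); nia.
    + apply seriesC_ext with (2 := seriesC_scal (W / (1 + q)) _ _ HSL). intros i. unfold betaC.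
      rewrite qpoch_shift. replace (- q * q) with (- (q * q)) by ring.
      replace (1 - - q) with (1 + q) by ring.
      rewrite !cpow_add, !cpow_mult. field.
      repeat split; auto; apply qpoch_neq_0; rewrite ?Cmod_opp; auto using Cmod_lt_1_mult.
  - replace (Lz * Lw * LP) with (SL * (Lq * W) / (1 + q)) by (rewrite HE; field; auto).
    field. auto.
Qed.

Theorem theorem4p5 (q : C) (hq : (Cmod q < 1)%R) :
  let q2 := pow_n q 2 in
  let q7 := pow_n q 7 in
  let den (i j k : nat) := qpoch q2 q2 i * qpoch q2 q2 j * qpoch q2 q2 k in
  (exists S P1 P2 P3 Pq,
     is_series3 (fun i j k =>
       pow_n q (2*i*i + j*j + k*k + 2*i*j + 2*i*k + k) / den i j k) S /\
     is_qpoch_inf (pow_n q 3) q7 P1 /\ is_qpoch_inf (pow_n q 4) q7 P2 /\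
     is_qpoch_inf (pow_n q 7) q7 P3 /\ is_qpoch_inf q q Pq /\
     S = P1 * P2 * P3 / Pq) /\
  (exists S P1 P2 P3 Pq,
     is_series3 (fun i j k =>
       pow_n q (2*i*i + j*j + k*k + 2*i*j + 2*i*k + 2*i + j) / den i j k) S /\
     is_qpoch_inf (pow_n q 2) q7 P1 /\ is_qpoch_inf (pow_n q 5) q7 P2 /\
     is_qpoch_inf (pow_n q 7) q7 P3 /\ is_qpoch_inf q q Pq /\
     S = P1 * P2 * P3 / Pq) /\
  (exists S P1 P2 P3 Pq,
     is_series3 (fun i j k =>
       pow_n q (2*i*i + j*j + k*k + 2*i*j + 2*i*k + 2*i + j + 2*k) / den i j k) S /\
     is_qpoch_inf (pow_n q 1) q7 P1 /\ is_qpoch_inf (pow_n q 6) q7 P2 /\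
     is_qpoch_inf (pow_n q 7) q7 P3 /\ is_qpoch_inf q q Pq /\
     S = P1 * P2 * P3 / Pq).
Proof.
  cbv zeta. split; [|split].
  - exact (identity_1 q hq).
  - exact (identity_2 q hq).
  - exact (identity_3 q hq).
Qed.
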